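(* Let $F\in\mathcal{P}$ with $K=\sup_{z\in\mathbb{D}}|\arg F(z)|<\frac{\pi}{2}$, and write $K=\arcsin\frac{2R}{1+R^2}$ with $0\le R<1$. If $\varphi$ is a Schwarz-type function with $\|\varphi\|_\infty\le\frac{1-R}{1+R}$, then $T_{F,\varphi}(f)\in\mathcal{P}$ for every $f\in\mathcal{P}$.
   Context: $\mathbb{D}$ is the open unit disk. $\mathcal{P}$ is the set of analytic $f$ on $\mathbb{D}$ with $\mathrm{Re}\,f>0$ and $f(0)=1$. A Schwarz-type function is an analytic $\varphi:\mathbb{D}\to\mathbb{D}$ with $\varphi(0)=0$. $\|\varphi\|_\infty=\sup_{z\in\mathbb{D}}|\varphi(z)|$. $\arg$ is the principal branch with values in $(-\pi,\pi]$. $T_{F,\varphi}(f)=F\cdot(f\circ\varphi)$. *)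

From Stdlib Require Import Reals.
From Coquelicot Require Import Coquelicot.
Open Scope R_scope.

Definition inD (z : C) : Prop := Cmod z < 1.

Definition analytic_on_D (f : C -> C) : Prop :=
  forall z : C, inD z -> ex_derive (K := C_AbsRing) (V := C_NormedModule) f z.

Definition classP (f : C -> C) : Prop :=
  analytic_on_D f /\ (forall z, inD z -> 0 < Re (f z)) /\ f (RtoC 0) = RtoC 1.

Definition schwarz_type (phi : C -> C) : Prop :=
  analytic_on_D phi /\ (forall z, inD z -> inD (phi z)) /\ phi (RtoC 0) = RtoC 0.

(* Principal argument, values in (-PI, PI]; convention Carg 0 = 0. *)
Definition Carg (z : C) : R :=
  let x := fst z in let y := snd z in
  if Rlt_dec 0 x then atan (y / x)
  else if Rlt_dec x 0 then
    (if Rle_dec 0 y then atan (y / x) + PI else atan (y / x) - PI)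
  else if Rlt_dec 0 y then PI / 2
  else if Rlt_dec y 0 then - (PI / 2)
  else 0.

Definition T_op (F phi f : C -> C) : C -> C := fun z => Cmult (F z) (f (phi z)).

(** With [r = (1 - R) / (1 + R)], Schwarz's lemma gives [|phi z| <= r |z| < r], and
    for [f] in [classP] the Cayley transform [o = (f - 1) / (f + 1)] satisfies [|o w| <= |w|],
    so [f (phi z) = (1 + o) / (1 - o)] with [|o| < r].  Since [tan K = 2R / (1 - R^2)
    = (1/r - r) / 2], the value [F z = x + i y] satisfies [|y| <= (1/r - r) / 2 * x], and the
    real part of [F z * (1 + o) / (1 - o)] has the sign of [x (1 - |o|^2) - 2 y Im o], which is
    at least [x (r - |o|) (|o| + 1/r) > 0].

    Goursat's theorem for triangles (by repeated
    quadrisection) extends to triangles with one vertex where the function is only continuous,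
    which yields Cauchy's theorem, and then Cauchy's formula, on regular polygons inscribed in the
    disk.  Writing [om z = h z * z], the formula for [om^n] at [a] bounds [|om a|^n] by a constant
    times [(|a| / rho)^n], [rho] the inradius; taking [n]-th roots and letting [rho -> 1] gives
    [|om a| <= |a|]. *)

From Stdlib Require Import Reals Lra Lia Psatz ZArith.
From Coquelicot Require Import Coquelicot.
Open Scope R_scope.

(** * Complex differentiability *)

Definition Ccont_at (g : C -> C) (z : C) : Prop :=
  forall eps, 0 < eps -> exists del, 0 < del /\ forall w, Cmod (w - z)%C < del ->
    Cmod (g w - g z)%C < eps.

Definition is_Cderive (g : C -> C) (z l : C) : Prop :=
  forall eps, 0 < eps -> exists del, 0 < del /\ forall w, Cmod (w - z)%C < del ->
    Cmod (g w - g z - (w - z) * l)%C <= eps * Cmod (w - z)%C.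

Definition holo_at (g : C -> C) (z : C) : Prop :=
  ex_derive (K := C_AbsRing) (V := C_NormedModule) g z.

Lemma Ceq (x y : C) : Re x = Re y -> Im x = Im y -> x = y.
Proof. destruct x, y; simpl; intros; subst; auto. Qed.

(* Coquelicot has two non-convertible normed-module structures on [C] over
   itself; its product and chain rules are stated for the second one. *)
Lemma is_Cderive_is_derive (g : C -> C) z l :
  is_Cderive g z l <-> is_derive (K := C_AbsRing) (V := C_NormedModule) g z l.
Proof.
  split.
  - intros H. split; [apply is_linear_scal_l|].
    intros x Hx.
    apply (is_filter_lim_locally_unique (K := C_AbsRing)
             (V := AbsRing_NormedModule C_AbsRing)) in Hx; subst x.
    intros eps. destruct (H eps (cond_pos eps)) as [del [Hd Hw]].
    exists (mkposreal _ Hd). intros y Hy. apply Hw, Hy.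
  - intros [_ H] eps Heps.
    destruct (H z (fun P HP => HP) (mkposreal eps Heps)) as [del Hdel].
    exists del. split; [apply cond_pos|]. intros w Hw. apply (Hdel w Hw).
Qed.

Lemma is_Cderive_is_derive_abs (g : C -> C) z l :
  is_Cderive g z l <->
  is_derive (K := C_AbsRing) (V := AbsRing_NormedModule C_AbsRing) g z l.
Proof.
  split.
  - intros H. split; [apply is_linear_scal_l|].
    intros x Hx.
    apply (is_filter_lim_locally_unique (K := C_AbsRing)
             (V := AbsRing_NormedModule C_AbsRing)) in Hx; subst x.
    intros eps. destruct (H eps (cond_pos eps)) as [del [Hd Hw]].
    exists (mkposreal _ Hd). intros y Hy. apply Hw, Hy.
  - intros [_ H] eps Heps.
    destruct (H z (fun P HP => HP) (mkposreal eps Heps)) as [del Hdel].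
    exists del. split; [apply cond_pos|]. intros w Hw. apply (Hdel w Hw).
Qed.

Lemma holo_at_is_Cderive g z : holo_at g z -> exists l, is_Cderive g z l.
Proof. intros [l Hl]. exists l. now apply is_Cderive_is_derive. Qed.

Lemma is_Cderive_holo_at g z l : is_Cderive g z l -> holo_at g z.
Proof. intros H. exists l. now apply is_Cderive_is_derive. Qed.

Lemma is_Cderive_cont g z l : is_Cderive g z l -> Ccont_at g z.
Proof.
  intros H eps Heps.
  destruct (H 1 Rlt_0_1) as [d [Hd Hw]].
  pose proof (Cmod_ge_0 l).
  exists (Rmin d (eps / (2 + Cmod l))). split.
  { apply Rmin_pos; auto. apply Rdiv_lt_0_compat; lra. }
  intros w Hwz.
  assert (H1 : Cmod (w - z)%C < d) by (eapply Rlt_le_trans; [exact Hwz | apply Rmin_l]).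
  assert (H2 : Cmod (w - z)%C * (2 + Cmod l) < eps).
  { apply (Rmult_lt_compat_r (2 + Cmod l)) in Hwz; [|lra].
    eapply Rlt_le_trans; [exact Hwz|].
    apply Rle_trans with (eps / (2 + Cmod l) * (2 + Cmod l)).
    - apply Rmult_le_compat_r; [lra | apply Rmin_r].
    - right. field. lra. }
  specialize (Hw w H1).
  replace (g w - g z)%C with ((g w - g z - (w - z) * l) + (w - z) * l)%C by ring.
  eapply Rle_lt_trans; [apply Cmod_triangle|]. rewrite Cmod_mult.
  pose proof (Cmod_ge_0 (w - z)%C). nra.
Qed.

Lemma holo_cont g z : holo_at g z -> Ccont_at g z.
Proof.
  intros H. destruct (holo_at_is_Cderive g z H) as [l Hl].
  eapply is_Cderive_cont; eauto.
Qed.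

Lemma holo_plus f g z :
  holo_at f z -> holo_at g z -> holo_at (fun w => f w + g w)%C z.
Proof.
  intros [lf Hf] [lg Hg]. exists (plus lf lg).
  apply (is_derive_plus (K := C_AbsRing) (V := C_NormedModule) f g z lf lg Hf Hg).
Qed.

Lemma holo_mult f g z :
  holo_at f z -> holo_at g z -> holo_at (fun w => f w * g w)%C z.
Proof.
  intros [lf Hf] [lg Hg].
  apply is_Cderive_is_derive, is_Cderive_is_derive_abs in Hf, Hg.
  eexists. apply is_Cderive_is_derive, is_Cderive_is_derive_abs.
  apply (is_derive_mult (K := C_AbsRing) f g z lf lg Hf Hg).
  intros; apply Cmult_comm.
Qed.

Lemma holo_const (c : C) z : holo_at (fun _ => c) z.
Proof. exists zero. apply (is_derive_const (K := C_AbsRing) (V := C_NormedModule)). Qed.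

Lemma holo_id z : holo_at (fun w => w) z.
Proof.
  apply (is_Cderive_holo_at _ _ 1%C). intros eps Heps. exists 1. split; [lra|].
  intros w _. replace (w - z - (w - z) * 1)%C with (RtoC 0) by ring. rewrite Cmod_0.
  pose proof (Cmod_ge_0 (w - z)%C). nra.
Qed.

Lemma holo_comp f g z : holo_at g z -> holo_at f (g z) -> holo_at (fun w => f (g w)) z.
Proof.
  intros [lg Hg] [lf Hf].
  apply is_Cderive_is_derive, is_Cderive_is_derive_abs in Hg.
  eexists. apply (is_derive_comp (K := C_AbsRing) (V := C_NormedModule) f g z lf lg Hf Hg).
Qed.

Lemma holo_ext_loc f g z :
  (exists d, 0 < d /\ forall w, Cmod (w - z)%C < d -> f w = g w) ->
  holo_at f z -> holo_at g z.
Proof.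
  intros [d [Hd Hfg]] [l Hl]. exists l.
  apply (is_derive_ext_loc (K := C_AbsRing) (V := C_NormedModule) f g z l); auto.
  exists (mkposreal d Hd). intros y Hy. apply Hfg, Hy.
Qed.

Lemma holo_minus f g z :
  holo_at f z -> holo_at g z -> holo_at (fun w => f w - g w)%C z.
Proof.
  intros Hf Hg.
  eapply holo_ext_loc;
    [| apply (holo_plus f (fun w => (-1) * g w)%C z Hf
                (holo_mult _ g z (holo_const _ z) Hg))].
  exists 1; split; [lra|]. intros; ring.
Qed.

Lemma holo_pow f n z : holo_at f z -> holo_at (fun w => Cpow (f w) n) z.
Proof.
  intros H. induction n; simpl.
  - apply holo_const.
  - apply (holo_mult f (fun w => Cpow (f w) n) z H IHn).
Qed.

Lemma is_Cderive_Cinv (u : C) : u <> 0%C -> is_Cderive Cinv u (- / (u * u))%C.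
Proof.
  intros Hu eps Heps.
  assert (Hm : 0 < Cmod u) by (apply Cmod_gt_0; exact Hu).
  assert (Hm3 : 0 < Cmod u ^ 3) by (apply pow_lt; auto).
  exists (Rmin (Cmod u / 2) (eps * Cmod u ^ 3 / 2)). split.
  { apply Rmin_pos; [lra|]. apply Rdiv_lt_0_compat; [apply Rmult_lt_0_compat|]; lra. }
  intros w Hw.
  assert (H1 : Cmod (w - u)%C < Cmod u / 2) by (eapply Rlt_le_trans; [exact Hw | apply Rmin_l]).
  assert (H2 : Cmod (w - u)%C < eps * Cmod u ^ 3 / 2) by (eapply Rlt_le_trans; [exact Hw | apply Rmin_r]).
  assert (Hwm : Cmod u / 2 < Cmod w).
  { pose proof (Cmod_triangle w (u - w)%C) as T.
    replace (w + (u - w))%C with u in T by ring.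
    replace (u - w)%C with (- (w - u))%C in T by ring. rewrite Cmod_opp in T. lra. }
  assert (Hw0 : w <> 0%C) by (intros ->; rewrite Cmod_0 in Hwm; lra).
  replace (/ w - / u - (w - u) * - / (u * u))%C with ((w - u) * (w - u) * / (u * u * w))%C
    by (field; split; auto).
  rewrite !Cmod_mult, Cmod_inv, !Cmod_mult by (repeat apply Cmult_neq_0; auto).
  set (x := Cmod (w - u)%C) in *. set (m := Cmod u) in *. set (c := Cmod w) in *.
  assert (0 <= x) by apply Cmod_ge_0.
  assert (Hc : 0 < m * m * c) by (apply Rmult_lt_0_compat; [apply Rmult_lt_0_compat|]; lra).
  rewrite Rmult_assoc, (Rmult_comm eps). apply Rmult_le_compat_l; auto.
  apply (Rmult_le_reg_r (m * m * c)); auto.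
  rewrite Rmult_assoc, Rinv_l, Rmult_1_r by lra.
  assert (m ^ 3 <= 2 * (m * m * c)) by (simpl; nra).
  nra.
Qed.

Lemma holo_inv f z : holo_at f z -> f z <> 0%C -> holo_at (fun w => / f w)%C z.
Proof.
  intros Hf Hz. apply (holo_comp Cinv f z Hf).
  eapply is_Cderive_holo_at. apply is_Cderive_Cinv; auto.
Qed.

Lemma holo_div f g z :
  holo_at f z -> holo_at g z -> g z <> 0%C -> holo_at (fun w => f w / g w)%C z.
Proof. intros. apply (holo_mult f (fun w => / g w)%C z); auto. apply holo_inv; auto. Qed.

Lemma Ccont_plus f g z :
  Ccont_at f z -> Ccont_at g z -> Ccont_at (fun w => f w + g w)%C z.
Proof.
  intros Hf Hg eps Heps.
  destruct (Hf (eps / 2)) as [d1 [Hd1 H1]]; [lra|].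
  destruct (Hg (eps / 2)) as [d2 [Hd2 H2]]; [lra|].
  exists (Rmin d1 d2). split; [apply Rmin_pos; auto|].
  intros w Hw.
  specialize (H1 w (Rlt_le_trans _ _ _ Hw (Rmin_l _ _))).
  specialize (H2 w (Rlt_le_trans _ _ _ Hw (Rmin_r _ _))).
  replace (f w + g w - (f z + g z))%C with ((f w - f z) + (g w - g z))%C by ring.
  eapply Rle_lt_trans; [apply Cmod_triangle | lra].
Qed.

Lemma Ccont_mult f g z :
  Ccont_at f z -> Ccont_at g z -> Ccont_at (fun w => f w * g w)%C z.
Proof.
  intros Hf Hg eps Heps.
  set (A := Cmod (f z)). set (B := Cmod (g z)).
  assert (HA : 0 <= A) by apply Cmod_ge_0. assert (HB : 0 <= B) by apply Cmod_ge_0.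
  set (e := Rmin 1 (eps / (A + B + 2))).
  assert (He : 0 < e) by (apply Rmin_pos; [lra | apply Rdiv_lt_0_compat; lra]).
  assert (He1 : e <= 1) by apply Rmin_l.
  assert (He2 : e * (A + B + 2) <= eps).
  { apply Rle_trans with (eps / (A + B + 2) * (A + B + 2)).
    - apply Rmult_le_compat_r; [lra | apply Rmin_r].
    - right; field; lra. }
  destruct (Hf e He) as [d1 [Hd1 H1]].
  destruct (Hg e He) as [d2 [Hd2 H2]].
  exists (Rmin d1 d2). split; [apply Rmin_pos; auto|].
  intros w Hw.
  specialize (H1 w (Rlt_le_trans _ _ _ Hw (Rmin_l _ _))).
  specialize (H2 w (Rlt_le_trans _ _ _ Hw (Rmin_r _ _))).
  replace (f w * g w - f z * g z)%C
    with ((f w - f z) * (g w - g z) + (f w - f z) * g z + f z * (g w - g z))%C by ring.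
  eapply Rle_lt_trans; [apply Cmod_triangle|].
  eapply Rle_lt_trans; [apply Rplus_le_compat_r, Cmod_triangle|].
  rewrite !Cmod_mult. fold A B.
  pose proof (Cmod_ge_0 (f w - f z)%C). pose proof (Cmod_ge_0 (g w - g z)%C).
  assert (Cmod (f w - f z)%C * Cmod (g w - g z)%C <= e * 1) by (apply Rmult_le_compat; lra).
  assert (Cmod (f w - f z)%C * B <= e * B) by (apply Rmult_le_compat_r; lra).
  assert (A * Cmod (g w - g z)%C <= A * e) by (apply Rmult_le_compat_l; lra).
  nra.
Qed.

Lemma Ccont_const c z : Ccont_at (fun _ => c) z.
Proof.
  intros eps Heps. exists 1. split; [lra|]. intros.
  replace (c - c)%C with (RtoC 0) by ring. rewrite Cmod_0; auto.
Qed.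

Lemma Ccont_pow f n z : Ccont_at f z -> Ccont_at (fun w => Cpow (f w) n) z.
Proof. intros H. induction n; simpl; [apply Ccont_const | apply (Ccont_mult f _ z H IHn)]. Qed.

Lemma Im_le_Cmod (z : C) : Rabs (Im z) <= Cmod z.
Proof.
  destruct z as [x y]. unfold Cmod; simpl. rewrite <- sqrt_Rsqr_abs.
  apply sqrt_le_1_alt. unfold Rsqr. nra.
Qed.

Lemma Cmod_sq (z : C) : Cmod z * Cmod z = Re z * Re z + Im z * Im z.
Proof. replace (Cmod z * Cmod z) with (Cmod z ^ 2) by ring. rewrite Cmod2_alt. ring. Qed.

Lemma scal_C_R (s : R) (z : C) : scal (V := C_R_NormedModule) s z = (RtoC s * z)%C.
Proof.
  destruct z as [x y]; apply injective_projections; simpl;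
    change (scal s x) with (s * x); change (scal s y) with (s * y); ring.
Qed.

Lemma plus_C_R (x y : C) : plus (G := C_R_NormedModule) x y = (x + y)%C.
Proof. reflexivity. Qed.

Lemma opp_C_R (x : C) : opp (G := C_R_NormedModule) x = (- x)%C.
Proof. reflexivity. Qed.

(* [ring] does not see through the carrier of [C_R_NormedModule]. *)
Ltac ring_C := cbv beta; match goal with |- ?x = ?y => change (@eq C x y); ring end.

Lemma ball_C_R (x y : C) (eps : R) :
  Cmod (y - x)%C < eps -> ball (M := C_R_NormedModule) x eps y.
Proof.
  intros H. split.
  - change (Rabs (Re (y - x)%C) < eps). eapply Rle_lt_trans; [apply re_le_Cmod | exact H].
  - change (Rabs (Im (y - x)%C) < eps). eapply Rle_lt_trans; [apply Im_le_Cmod | exact H].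
Qed.

Lemma is_RInt_Re (f : R -> C) a b l : is_RInt (V := C_R_NormedModule) f a b l ->
  is_RInt (fun t => Re (f t)) a b (Re l).
Proof. apply (is_RInt_fct_extend_fst (U := R_NormedModule) (V := R_NormedModule)). Qed.

Lemma is_RInt_Im (f : R -> C) a b l : is_RInt (V := C_R_NormedModule) f a b l ->
  is_RInt (fun t => Im (f t)) a b (Im l).
Proof. apply (is_RInt_fct_extend_snd (U := R_NormedModule) (V := R_NormedModule)). Qed.

Lemma is_RInt_Cmult_l (c : C) (f : R -> C) a b l :
  is_RInt (V := C_R_NormedModule) f a b l ->
  is_RInt (V := C_R_NormedModule) (fun t => c * f t)%C a b (c * l)%C.
Proof.
  intros H.
  pose proof (is_RInt_Re f a b l H) as HRe. pose proof (is_RInt_Im f a b l H) as HIm.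
  apply (is_RInt_fct_extend_pair (U := R_NormedModule) (V := R_NormedModule)).
  - eapply is_RInt_ext;
      [| apply (is_RInt_minus (V := R_NormedModule) _ _ _ _ _ _
                  (is_RInt_scal _ _ _ (Re c) _ HRe) (is_RInt_scal _ _ _ (Im c) _ HIm))].
    intros; reflexivity.
  - eapply is_RInt_ext;
      [| apply (is_RInt_plus (V := R_NormedModule) _ _ _ _ _ _
                  (is_RInt_scal _ _ _ (Re c) _ HIm) (is_RInt_scal _ _ _ (Im c) _ HRe))].
    intros; reflexivity.
Qed.

(** * Integrals along segments *)

Definition seg (a b : C) (t : R) : C := (a + RtoC t * (b - a))%C.

Definition cint (g : C -> C) (a b : C) : C :=
  RInt (V := C_R_CompleteNormedModule) (fun t => g (seg a b t) * (b - a))%C 0 1.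

Definition Scont (g : C -> C) (a b : C) : Prop :=
  forall t, 0 <= t <= 1 -> Ccont_at g (seg a b t).

Lemma Cmod_seg_sub a b t s : Cmod (seg a b t - seg a b s)%C = Rabs (t - s) * Cmod (b - a)%C.
Proof.
  replace (seg a b t - seg a b s)%C with (RtoC (t - s) * (b - a))%C
    by (unfold seg; apply Ceq; simpl; ring).
  rewrite Cmod_mult, Cmod_R. reflexivity.
Qed.

Lemma seg_continuous g a b t : Ccont_at g (seg a b t) ->
  @continuous R_UniformSpace C_R_NormedModule (fun s => g (seg a b s) * (b - a))%C t.
Proof.
  intros Hc. apply filterlim_locally. intros eps.
  set (K := Cmod (b - a)%C). assert (HK : 0 <= K) by apply Cmod_ge_0.
  destruct (Hc (eps / (K + 1))) as [d [Hd Hw]]; [apply Rdiv_lt_0_compat; [apply cond_pos | lra]|].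
  assert (Hd' : 0 < d / (K + 1)) by (apply Rdiv_lt_0_compat; lra).
  exists (mkposreal _ Hd'). intros s Hs. change (Rabs (s - t) < d / (K + 1)) in Hs.
  set (D := ((g (seg a b s) - g (seg a b t)) * (b - a))%C).
  assert (HD : Cmod D < eps).
  { unfold D. rewrite Cmod_mult. fold K.
    assert (Hlt : Cmod (g (seg a b s) - g (seg a b t))%C < eps / (K + 1)).
    { apply Hw. rewrite Cmod_seg_sub. fold K.
      apply Rle_lt_trans with (Rabs (s - t) * (K + 1)); [apply Rmult_le_compat_l; [apply Rabs_pos | lra]|].
      apply Rmult_lt_reg_r with (/ (K + 1)); [apply Rinv_0_lt_compat; lra|].
      rewrite Rmult_assoc, Rinv_r, Rmult_1_r by lra. exact Hs. }
    pose proof (Cmod_ge_0 (g (seg a b s) - g (seg a b t))%C).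
    assert (eps / (K + 1) * K < eps).
    { apply Rlt_le_trans with (eps / (K + 1) * (K + 1)).
      - apply Rmult_lt_compat_l; [apply Rdiv_lt_0_compat; [apply cond_pos|] |]; lra.
      - right; field; lra. }
    apply Rle_lt_trans with (eps / (K + 1) * K); [apply Rmult_le_compat_r|]; lra. }
  apply ball_C_R. replace (_ - _)%C with D by (unfold D; ring). exact HD.
Qed.

Lemma ex_RInt_seg g a b u v : Scont g a b -> 0 <= u <= 1 -> 0 <= v <= 1 ->
  ex_RInt (V := C_R_NormedModule) (fun t => g (seg a b t) * (b - a))%C u v.
Proof.
  intros H Hu Hv. apply (ex_RInt_continuous (V := C_R_CompleteNormedModule)).
  intros z Hz. apply seg_continuous, H. split.
  - apply Rle_trans with (Rmin u v); [apply Rmin_glb|]; lra.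
  - apply Rle_trans with (Rmax u v); [|apply Rmax_lub]; lra.
Qed.

Lemma RInt_seg_correct g a b : Scont g a b ->
  is_RInt (V := C_R_NormedModule) (fun t => g (seg a b t) * (b - a))%C 0 1 (cint g a b).
Proof.
  intros H. apply (RInt_correct (V := C_R_CompleteNormedModule)).
  apply ex_RInt_seg; auto; lra.
Qed.

Lemma cint_ext g1 g2 a b :
  (forall t, 0 <= t <= 1 -> g1 (seg a b t) = g2 (seg a b t)) -> cint g1 a b = cint g2 a b.
Proof.
  intros H. unfold cint. apply (RInt_ext (V := C_R_CompleteNormedModule)). intros t Ht.
  rewrite Rmin_left, Rmax_right in Ht by lra. rewrite H; auto; lra.
Qed.

Lemma cint_plus f g a b : Scont f a b -> Scont g a b ->
  cint (fun z => f z + g z)%C a b = (cint f a b + cint g a b)%C.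
Proof.
  intros Hf Hg. apply (is_RInt_unique (V := C_R_CompleteNormedModule)).
  eapply is_RInt_ext;
    [| apply (is_RInt_plus (V := C_R_NormedModule) _ _ _ _ _ _
                (RInt_seg_correct f a b Hf) (RInt_seg_correct g a b Hg))].
  intros t _. cbv beta. rewrite plus_C_R. ring_C.
Qed.

Lemma cint_scal (c : C) g a b : Scont g a b ->
  cint (fun z => c * g z)%C a b = (c * cint g a b)%C.
Proof.
  intros Hg. apply (is_RInt_unique (V := C_R_CompleteNormedModule)).
  eapply is_RInt_ext; [| apply (is_RInt_Cmult_l c _ _ _ _ (RInt_seg_correct g a b Hg))].
  intros t _. ring_C.
Qed.

Lemma cint_bound g a b M : Scont g a b ->
  (forall t, 0 <= t <= 1 -> Cmod (g (seg a b t)) <= M) ->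
  Cmod (cint g a b) <= M * Cmod (b - a)%C.
Proof.
  intros Hg HM.
  set (J := cint g a b).
  assert (HM0 : 0 <= M) by (eapply Rle_trans; [apply Cmod_ge_0 | apply (HM 0); lra]).
  destruct (Req_dec (Cmod J) 0) as [E|E].
  { rewrite E. apply Rmult_le_pos; auto. apply Cmod_ge_0. }
  assert (HJ : 0 < Cmod J) by (pose proof (Cmod_ge_0 J); lra).
  apply Rmult_le_reg_l with (Cmod J); auto.
  (* |J|^2 = Re (conj J * J) is the integral of Re (conj J * integrand). *)
  pose proof (is_RInt_Re _ _ _ _ (is_RInt_Cmult_l (Cconj J) _ _ _ _ (RInt_seg_correct g a b Hg)))
    as HRe.
  replace (Cmod J * Cmod J) with (Re (Cconj J * J)%C)
    by (rewrite Cmod_sq; destruct J; simpl; ring).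
  rewrite <- (Rmult_1_l (Cmod J * (M * Cmod (b - a)%C))), <- (Rminus_0_r 1).
  refine (Rle_trans _ _ _ (Rle_abs _)
            (norm_RInt_le_const (V := R_NormedModule) _ 0 1 _ _ ltac:(lra) _ HRe)).
  intros t Ht. eapply Rle_trans; [apply re_le_Cmod|].
  rewrite !Cmod_mult, Cmod_conj. apply Rmult_le_compat_l; [apply Cmod_ge_0|].
  apply Rmult_le_compat_r; [apply Cmod_ge_0 | apply HM, Ht].
Qed.

Lemma cint_seg_seg g a b u v : Scont g a b -> 0 <= u <= 1 -> 0 <= v <= 1 ->
  cint g (seg a b u) (seg a b v) =
  RInt (V := C_R_CompleteNormedModule) (fun t => g (seg a b t) * (b - a))%C u v.
Proof.
  intros Hg Hu Hv.
  replace (RInt (V := C_R_CompleteNormedModule) _ u v)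
    with (RInt (V := C_R_CompleteNormedModule) (fun t => g (seg a b t) * (b - a))%C
            ((v - u) * 0 + u) ((v - u) * 1 + u)) by (f_equal; ring).
  rewrite <- (RInt_comp_lin (V := C_R_CompleteNormedModule))
    by (replace ((v - u) * 0 + u) with u by ring; replace ((v - u) * 1 + u) with v by ring;
        apply ex_RInt_seg; auto).
  apply (RInt_ext (V := C_R_CompleteNormedModule)). intros t _.
  rewrite scal_C_R.
  replace (seg (seg a b u) (seg a b v) t) with (seg a b ((v - u) * t + u))
    by (unfold seg; apply Ceq; simpl; ring).
  replace (seg a b v - seg a b u)%C with (RtoC (v - u) * (b - a))%C
    by (unfold seg; apply Ceq; simpl; ring).
  ring_C.
Qed.

Lemma seg_0_1 a b : seg a b 0 = a /\ seg a b 1 = b.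
Proof. unfold seg; split; apply Ceq; unfold Re, Im; simpl; ring. Qed.

Lemma cint_split g a b s : Scont g a b -> 0 <= s <= 1 ->
  cint g a b = (cint g a (seg a b s) + cint g (seg a b s) b)%C.
Proof.
  intros Hg Hs. destruct (seg_0_1 a b) as [Ea Eb].
  pose proof (cint_seg_seg g a b 0 1 Hg ltac:(lra) ltac:(lra)) as I01.
  pose proof (cint_seg_seg g a b 0 s Hg ltac:(lra) Hs) as I0s.
  pose proof (cint_seg_seg g a b s 1 Hg Hs ltac:(lra)) as Is1.
  rewrite Ea, Eb in I01. rewrite Ea in I0s. rewrite Eb in Is1.
  rewrite I01, I0s, Is1, <- plus_C_R.
  symmetry. apply (RInt_Chasles (V := C_R_CompleteNormedModule)); apply ex_RInt_seg; auto; lra.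
Qed.

Lemma cint_rev g a b : Scont g a b -> cint g b a = (- cint g a b)%C.
Proof.
  intros Hg. destruct (seg_0_1 a b) as [Ea Eb].
  pose proof (cint_seg_seg g a b 0 1 Hg ltac:(lra) ltac:(lra)) as I01.
  pose proof (cint_seg_seg g a b 1 0 Hg ltac:(lra) ltac:(lra)) as I10.
  rewrite Ea, Eb in I01, I10.
  rewrite I01, I10, <- opp_C_R.
  symmetry. apply (opp_RInt_swap (V := C_R_CompleteNormedModule)), ex_RInt_seg; auto; lra.
Qed.

Lemma RInt_affine (A B : R) : RInt (fun t => A + B * t) 0 1 = A + B / 2.
Proof.
  apply is_RInt_unique.
  replace (A + B / 2) with (minus ((fun t => A * t + B * t ^ 2 / 2) 1) ((fun t => A * t + B * t ^ 2 / 2) 0))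
    by (unfold minus, plus, opp; simpl; field).
  apply (is_RInt_derive (V := R_CompleteNormedModule) (fun t => A * t + B * t ^ 2 / 2) _ 0 1).
  - intros x _. auto_derive; auto. simpl. field.
  - intros x _. apply (continuous_plus (K := R_AbsRing) (V := R_NormedModule)).
    + apply continuous_const.
    + apply (continuous_mult (K := R_AbsRing)); [apply continuous_const | apply continuous_id].
Qed.

Lemma cint_affine (c0 c1 a b : C) :
  cint (fun z => c0 + c1 * z)%C a b = (c0 * (b - a) + c1 * (b * b - a * a) * RtoC (/ 2))%C.
Proof.
  assert (Hc : Scont (fun z => c0 + c1 * z)%C a b)
    by (intros t _; apply holo_cont, holo_plus, holo_mult; [apply holo_const | apply holo_const | apply holo_id]).
  pose proof (RInt_seg_correct _ _ _ Hc) as H.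
  apply Ceq.
  - rewrite <- (is_RInt_unique _ _ _ _ (is_RInt_Re _ _ _ _ H)).
    transitivity (RInt (fun t => Re ((c0 + c1 * a) * (b - a))%C + Re (c1 * (b - a) * (b - a))%C * t) 0 1).
    + apply RInt_ext. intros t _. unfold seg. destruct c0, c1, a, b; simpl; ring.
    + rewrite RInt_affine. destruct c0, c1, a, b; simpl; field.
  - rewrite <- (is_RInt_unique _ _ _ _ (is_RInt_Im _ _ _ _ H)).
    transitivity (RInt (fun t => Im ((c0 + c1 * a) * (b - a))%C + Im (c1 * (b - a) * (b - a))%C * t) 0 1).
    + apply RInt_ext. intros t _. unfold seg. destruct c0, c1, a, b; simpl; ring.
    + rewrite RInt_affine. destruct c0, c1, a, b; simpl; field.
Qed.

(** * Goursat's theorem *)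

Lemma half_pow_pos k : 0 < (/ 2) ^ k.
Proof. apply pow_lt. lra. Qed.

Lemma half_pow_lt eps : 0 < eps -> exists k, (/ 2) ^ k < eps.
Proof.
  intros He. destruct (pow_lt_1_zero (/ 2)) with eps as [N HN]; auto.
  - rewrite Rabs_pos_eq; lra.
  - exists N. specialize (HN N (le_n N)).
    rewrite Rabs_pos_eq in HN; [exact HN | left; apply half_pow_pos].
Qed.

Lemma le_0_of_le_half_pow (M r : R) : (forall k, r <= M * (/ 2) ^ k) -> r <= 0.
Proof.
  intros H. destruct (Rle_dec r 0) as [|Hr]; auto.
  pose proof (Rabs_pos M). pose proof (Rle_abs M).
  destruct (half_pow_lt (r / (Rabs M + 1))) as [k Hk]; [apply Rdiv_lt_0_compat; lra|].
  specialize (H k). pose proof (half_pow_pos k).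
  assert ((/ 2) ^ k * (Rabs M + 1) < r).
  { apply Rmult_lt_reg_r with (/ (Rabs M + 1)); [apply Rinv_0_lt_compat; lra|].
    rewrite Rmult_assoc, Rinv_r, Rmult_1_r by lra. exact Hk. }
  nra.
Qed.

Lemma geometric_cauchy_limit (s : nat -> R) :
  (forall k, - (/ 2) ^ k <= s (S k) - s k <= (/ 2) ^ k) ->
  exists L, forall k, - (2 * (/ 2) ^ k) <= s k - L <= 2 * (/ 2) ^ k.
Proof.
  intros H.
  set (l := fun k => s k - 2 * (/ 2) ^ k).
  set (u := fun k => s k + 2 * (/ 2) ^ k).
  assert (Hlm : forall k m, (k <= m)%nat -> l k <= l m).
  { intros k m Hkm. induction Hkm as [|m Hkm IH]; [lra|].
    eapply Rle_trans; [exact IH|]. unfold l. simpl. specialize (H m). lra. }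
  assert (Hum : forall k m, (k <= m)%nat -> u m <= u k).
  { intros k m Hkm. induction Hkm as [|m Hkm IH]; [lra|].
    eapply Rle_trans; [|exact IH]. unfold u. simpl. specialize (H m). lra. }
  assert (Hlu : forall k j, l k <= u j).
  { intros k j. assert (forall i, l i <= u i) by (intros i; unfold l, u; pose proof (half_pow_pos i); lra).
    destruct (Nat.le_ge_cases k j) as [Hkj|Hkj].
    - eapply Rle_trans; [apply (Hlm k j Hkj) | auto].
    - eapply Rle_trans; [| apply (Hum j k Hkj)]; auto. }
  destruct (completeness (fun x => exists k, x = l k)) as [L [HL1 HL2]].
  - exists (u 0%nat). intros x [k ->]. apply Hlu.
  - exists (l 0%nat), 0%nat. reflexivity.
  - exists L. intros k.
    assert (l k <= L) by (apply HL1; exists k; reflexivity).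
    assert (L <= u k) by (apply HL2; intros x [j ->]; apply Hlu).
    unfold l, u in *. lra.
Qed.

Definition tri_pt (a b c : C) (u : R * R) : C :=
  (a + RtoC (fst u) * (b - a) + RtoC (snd u) * (c - a))%C.

Definition in_simplex (u : R * R) : Prop := 0 <= fst u /\ 0 <= snd u /\ fst u + snd u <= 1.

Definition tri_int (g : C -> C) (p q r : C) : C := (cint g p q + cint g q r + cint g r p)%C.

(* Triangles in the parameter plane, mapped onto the complex plane by [tri_pt a b c]. *)
Inductive ptri := PTri (u1 u2 u3 : R * R).

Definition pmid (u v : R * R) : R * R := ((fst u + fst v) / 2, (snd u + snd v) / 2).

Definition pseg (u v : R * R) (t : R) : R * R :=
  (fst u + t * (fst v - fst u), snd u + t * (snd v - snd u)).

Definition quarter0 T := match T with PTri u1 u2 u3 => PTri u1 (pmid u1 u2) (pmid u3 u1) end.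
Definition quarter1 T := match T with PTri u1 u2 u3 => PTri (pmid u1 u2) u2 (pmid u2 u3) end.
Definition quarter2 T := match T with PTri u1 u2 u3 => PTri (pmid u3 u1) (pmid u2 u3) u3 end.
Definition quarter3 T :=
  match T with PTri u1 u2 u3 => PTri (pmid u2 u3) (pmid u3 u1) (pmid u1 u2) end.

Definition ptri_in_simplex (T : ptri) : Prop :=
  match T with PTri u1 u2 u3 => in_simplex u1 /\ in_simplex u2 /\ in_simplex u3 end.

Definition near (h : R) (u v : R * R) : Prop :=
  - h <= fst u - fst v <= h /\ - h <= snd u - snd v <= h.

Definition ptri_small (h : R) (T : ptri) : Prop :=
  match T with PTri u1 u2 u3 => near h u1 u2 /\ near h u2 u3 /\ near h u1 u3 end.

Definition vertex1 (T : ptri) := match T with PTri u1 _ _ => u1 end.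

Lemma tri_pt_vertices a b c :
  tri_pt a b c (0, 0) = a /\ tri_pt a b c (1, 0) = b /\ tri_pt a b c (0, 1) = c.
Proof. unfold tri_pt; split; [|split]; apply Ceq; unfold Re, Im; simpl; ring. Qed.

Lemma tri_pt_pseg a b c u v t : seg (tri_pt a b c u) (tri_pt a b c v) t = tri_pt a b c (pseg u v t).
Proof. unfold seg, tri_pt, pseg. apply Ceq; simpl; ring. Qed.

Lemma tri_pt_pmid a b c u v : tri_pt a b c (pmid u v) = seg (tri_pt a b c u) (tri_pt a b c v) (/ 2).
Proof. unfold seg, tri_pt, pmid. apply Ceq; simpl; field. Qed.

Lemma in_simplex_pseg u v t : in_simplex u -> in_simplex v -> 0 <= t <= 1 -> in_simplex (pseg u v t).
Proof. unfold in_simplex, pseg; simpl. intros [? [? ?]] [? [? ?]] [? ?]. repeat split; nra. Qed.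

Lemma in_simplex_pmid u v : in_simplex u -> in_simplex v -> in_simplex (pmid u v).
Proof. unfold in_simplex, pmid; simpl. intros; lra. Qed.

Lemma ptri_in_simplex_quarters T : ptri_in_simplex T ->
  ptri_in_simplex (quarter0 T) /\ ptri_in_simplex (quarter1 T) /\
  ptri_in_simplex (quarter2 T) /\ ptri_in_simplex (quarter3 T).
Proof.
  destruct T as [u1 u2 u3]. simpl. intros [H1 [H2 H3]].
  pose proof (in_simplex_pmid _ _ H1 H2). pose proof (in_simplex_pmid _ _ H2 H3).
  pose proof (in_simplex_pmid _ _ H3 H1). tauto.
Qed.

Lemma ptri_small_quarters h T : ptri_small h T ->
  (ptri_small (h / 2) (quarter0 T) /\ near h (vertex1 T) (vertex1 (quarter0 T))) /\
  (ptri_small (h / 2) (quarter1 T) /\ near h (vertex1 T) (vertex1 (quarter1 T))) /\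
  (ptri_small (h / 2) (quarter2 T) /\ near h (vertex1 T) (vertex1 (quarter2 T))) /\
  (ptri_small (h / 2) (quarter3 T) /\ near h (vertex1 T) (vertex1 (quarter3 T))).
Proof.
  destruct T as [[x1 y1] [x2 y2] [x3 y3]].
  unfold ptri_small, near, quarter0, quarter1, quarter2, quarter3, vertex1, pmid; simpl.
  intros; repeat split; lra.
Qed.

Lemma near_sym e p q : near e p q -> near e q p.
Proof. unfold near; lra. Qed.

Lemma near_trans e1 e2 p q s : near e1 p q -> near e2 q s -> near (e1 + e2) p s.
Proof. unfold near; lra. Qed.

Lemma near_pseg e p q s t : near e p s -> near e q s -> 0 <= t <= 1 -> near e (pseg p q t) s.
Proof. unfold near, pseg; simpl. intros [[? ?] [? ?]] [[? ?] [? ?]] [? ?]. repeat split; nra. Qed.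

Lemma Cmod_tri_pt_sub a b c e p q : near e p q ->
  Cmod (tri_pt a b c p - tri_pt a b c q)%C <= e * (Cmod (b - a)%C + Cmod (c - a)%C).
Proof.
  intros [Hx Hy].
  replace (tri_pt a b c p - tri_pt a b c q)%C
    with (RtoC (fst p - fst q) * (b - a) + RtoC (snd p - snd q) * (c - a))%C
    by (unfold tri_pt; apply Ceq; simpl; ring).
  eapply Rle_trans; [apply Cmod_triangle|]. rewrite !Cmod_mult, !Cmod_R.
  assert (Rabs (fst p - fst q) <= e) by (apply Rabs_le; lra).
  assert (Rabs (snd p - snd q) <= e) by (apply Rabs_le; lra).
  pose proof (Cmod_ge_0 (b - a)%C). pose proof (Cmod_ge_0 (c - a)%C).
  pose proof (Rabs_pos (fst p - fst q)). pose proof (Rabs_pos (snd p - snd q)).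
  nra.
Qed.

Lemma tri_int_affine (c0 c1 p q r : C) : tri_int (fun z => c0 + c1 * z)%C p q r = RtoC 0.
Proof. unfold tri_int. rewrite !cint_affine. apply Ceq; simpl; field. Qed.

Lemma Ccont_affine (c0 c1 : C) z : Ccont_at (fun w => c0 + c1 * w)%C z.
Proof. apply holo_cont, holo_plus, holo_mult; [apply holo_const | apply holo_const | apply holo_id]. Qed.

Lemma tri_int_sub_affine g (c0 c1 : C) p q r :
  Scont g p q -> Scont g q r -> Scont g r p ->
  tri_int g p q r = tri_int (fun z => g z + (-1) * (c0 + c1 * z))%C p q r.
Proof.
  intros H1 H2 H3.
  assert (E : forall u v, Scont g u v ->
    cint (fun z => g z + (-1) * (c0 + c1 * z))%C u v = (cint g u v + (-1) * cint (fun z => c0 + c1 * z)%C u v)%C).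
  { intros u v Hg. rewrite cint_plus, cint_scal; auto.
    - intros t _. apply Ccont_affine.
    - intros t Ht. apply Ccont_mult; [apply Ccont_const | apply Ccont_affine]. }
  pose proof (tri_int_affine c0 c1 p q r) as Z. unfold tri_int in *.
  rewrite !E by auto.
  transitivity (cint g p q + cint g q r + cint g r p + (-1) *
    (cint (fun z => c0 + c1 * z)%C p q + cint (fun z => c0 + c1 * z)%C q r +
     cint (fun z => c0 + c1 * z)%C r p))%C; [rewrite Z | ]; ring.
Qed.

Section Goursat.

Variables (g : C -> C) (a b c : C).
Hypothesis g_holo : forall u, in_simplex u -> holo_at g (tri_pt a b c u).

Definition ptri_int (T : ptri) : C :=
  match T with PTri u1 u2 u3 => tri_int g (tri_pt a b c u1) (tri_pt a b c u2) (tri_pt a b c u3) end.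

Definition ptri_norm (T : ptri) : R := Cmod (ptri_int T).

Definition pick_larger (T1 T2 : ptri) : ptri :=
  if Rle_dec (ptri_norm T2) (ptri_norm T1) then T1 else T2.

Definition next_quarter (T : ptri) : ptri :=
  pick_larger (pick_larger (quarter0 T) (quarter1 T)) (pick_larger (quarter2 T) (quarter3 T)).

Fixpoint nested_ptri (n : nat) : ptri :=
  match n with O => PTri (0, 0) (1, 0) (0, 1) | S k => next_quarter (nested_ptri k) end.

Lemma Scont_tri_pt u v : in_simplex u -> in_simplex v -> Scont g (tri_pt a b c u) (tri_pt a b c v).
Proof.
  intros Hu Hv t Ht. rewrite tri_pt_pseg. apply holo_cont, g_holo, in_simplex_pseg; auto.
Qed.

Lemma ptri_int_quarters T : ptri_in_simplex T ->
  ptri_int T = (ptri_int (quarter0 T) + ptri_int (quarter1 T) +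
                ptri_int (quarter2 T) + ptri_int (quarter3 T))%C.
Proof.
  destruct T as [u1 u2 u3]. simpl. intros [H1 [H2 H3]]. unfold tri_int.
  pose proof (in_simplex_pmid _ _ H1 H2). pose proof (in_simplex_pmid _ _ H2 H3).
  pose proof (in_simplex_pmid _ _ H3 H1).
  rewrite (cint_split g (tri_pt a b c u1) (tri_pt a b c u2) (/ 2)),
          (cint_split g (tri_pt a b c u2) (tri_pt a b c u3) (/ 2)),
          (cint_split g (tri_pt a b c u3) (tri_pt a b c u1) (/ 2))
    by (try apply Scont_tri_pt; auto; lra).
  rewrite <- !tri_pt_pmid.
  rewrite (cint_rev g (tri_pt a b c (pmid u3 u1)) (tri_pt a b c (pmid u1 u2))),
          (cint_rev g (tri_pt a b c (pmid u2 u3)) (tri_pt a b c (pmid u3 u1))),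
          (cint_rev g (tri_pt a b c (pmid u1 u2)) (tri_pt a b c (pmid u2 u3)))
    by (apply Scont_tri_pt; auto).
  ring.
Qed.

Lemma next_quarter_cases T :
  next_quarter T = quarter0 T \/ next_quarter T = quarter1 T \/
  next_quarter T = quarter2 T \/ next_quarter T = quarter3 T.
Proof. unfold next_quarter, pick_larger. repeat destruct Rle_dec; tauto. Qed.

Lemma ptri_norm_le_next_quarter T :
  ptri_norm (quarter0 T) <= ptri_norm (next_quarter T) /\
  ptri_norm (quarter1 T) <= ptri_norm (next_quarter T) /\
  ptri_norm (quarter2 T) <= ptri_norm (next_quarter T) /\
  ptri_norm (quarter3 T) <= ptri_norm (next_quarter T).
Proof. unfold next_quarter, pick_larger. repeat destruct Rle_dec; lra. Qed.

Lemma ptri_norm_next_quarter T : ptri_in_simplex T ->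
  ptri_norm T <= 4 * ptri_norm (next_quarter T).
Proof.
  intros HT. pose proof (ptri_norm_le_next_quarter T).
  unfold ptri_norm in *. rewrite ptri_int_quarters by auto.
  eapply Rle_trans; [apply Cmod_triangle|].
  eapply Rle_trans; [apply Rplus_le_compat_r, Cmod_triangle|].
  eapply Rle_trans; [apply Rplus_le_compat_r, Rplus_le_compat_r, Cmod_triangle|].
  lra.
Qed.

Lemma nested_ptri_props k :
  ptri_in_simplex (nested_ptri k) /\ ptri_small ((/ 2) ^ k) (nested_ptri k) /\
  near ((/ 2) ^ k) (vertex1 (nested_ptri k)) (vertex1 (nested_ptri (S k))).
Proof.
  assert (Step : forall h T, ptri_small h T ->
            near h (vertex1 T) (vertex1 (next_quarter T)) /\ ptri_small (h / 2) (next_quarter T)).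
  { intros h T HT. pose proof (ptri_small_quarters h T HT).
    destruct (next_quarter_cases T) as [E|[E|[E|E]]]; rewrite E; tauto. }
  induction k as [|k [HI [HS _]]].
  - assert (S0 : ptri_small 1 (PTri (0, 0) (1, 0) (0, 1))) by (unfold ptri_small, near; simpl; lra).
    split; [unfold ptri_in_simplex, in_simplex; simpl; lra|].
    split; [exact S0 | apply (Step 1 _ S0)].
  - assert (HI' : ptri_in_simplex (nested_ptri (S k))).
    { simpl. pose proof (ptri_in_simplex_quarters _ HI).
      destruct (next_quarter_cases (nested_ptri k)) as [E|[E|[E|E]]]; rewrite E; tauto. }
    assert (HS' : ptri_small ((/ 2) ^ S k) (nested_ptri (S k))).
    { replace ((/ 2) ^ S k) with ((/ 2) ^ k / 2) by (simpl; field). apply (Step _ _ HS). }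
    split; [exact HI'|]. split; [exact HS' | apply (Step _ _ HS')].
Qed.

Lemma nested_ptri_limit : exists X Y, in_simplex (X, Y) /\
  forall k, near (2 * (/ 2) ^ k) (vertex1 (nested_ptri k)) (X, Y).
Proof.
  destruct (geometric_cauchy_limit (fun k => fst (vertex1 (nested_ptri k)))) as [X HX].
  { intros k. destruct (nested_ptri_props k) as [_ [_ [Hx _]]]. cbv beta. lra. }
  destruct (geometric_cauchy_limit (fun k => snd (vertex1 (nested_ptri k)))) as [Y HY].
  { intros k. destruct (nested_ptri_props k) as [_ [_ [_ Hy]]]. cbv beta. lra. }
  exists X, Y. split; [| intros k; split; simpl; [apply HX | apply HY]].
  assert (I1 : forall k, in_simplex (vertex1 (nested_ptri k))).
  { intros k. destruct (nested_ptri_props k) as [HI _].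
    destruct (nested_ptri k) as [u1 u2 u3]. apply HI. }
  unfold in_simplex; simpl. repeat split.
  - assert (- X <= 0); [|lra]. apply (le_0_of_le_half_pow 2).
    intros k. specialize (HX k). destruct (I1 k). lra.
  - assert (- Y <= 0); [|lra]. apply (le_0_of_le_half_pow 2).
    intros k. specialize (HY k). destruct (I1 k) as [_ [? _]]. lra.
  - assert (X + Y - 1 <= 0); [|lra]. apply (le_0_of_le_half_pow 4).
    intros k. specialize (HX k). specialize (HY k). destruct (I1 k) as [_ [_ ?]]. lra.
Qed.

Lemma nested_ptri_norm_lower k :
  ptri_norm (nested_ptri 0) * ((/ 2) ^ k * (/ 2) ^ k) <= ptri_norm (nested_ptri k).
Proof.
  induction k as [|k IH]; [simpl; lra|].
  destruct (nested_ptri_props k) as [HI _].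
  pose proof (ptri_norm_next_quarter _ HI).
  change (nested_ptri (S k)) with (next_quarter (nested_ptri k)). simpl pow. lra.
Qed.

Let span := (Cmod (b - a)%C + Cmod (c - a)%C).

Lemma span_ge_0 : 0 <= span.
Proof. pose proof (Cmod_ge_0 (b - a)%C). pose proof (Cmod_ge_0 (c - a)%C). unfold span. lra. Qed.

Lemma cint_tangent_remainder zs lam eps del h p q X Y :
  (forall w, Cmod (w - zs)%C < del ->
     Cmod (g w - g zs - (w - zs) * lam)%C <= eps * Cmod (w - zs)%C) ->
  zs = tri_pt a b c (X, Y) -> in_simplex p -> in_simplex q ->
  near (3 * h) p (X, Y) -> near (3 * h) q (X, Y) -> near h q p ->
  3 * h * span < del -> 0 <= eps -> 0 <= h ->
  Cmod (cint (fun z => g z + (-1) * ((g zs - lam * zs) + lam * z))%C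
          (tri_pt a b c p) (tri_pt a b c q))
    <= eps * (3 * h * span) * (h * span).
Proof.
  intros Hdiff Ezs Hp Hq Cp Cq Cpq Hdel Heps Hh. pose proof span_ge_0.
  eapply Rle_trans; [apply (cint_bound _ _ _ (eps * (3 * h * span)))|].
  - intros t Ht. apply Ccont_plus; [rewrite tri_pt_pseg; apply holo_cont, g_holo, in_simplex_pseg; auto|].
    apply Ccont_mult; [apply Ccont_const | apply Ccont_affine].
  - intros t Ht. rewrite tri_pt_pseg.
    set (w := tri_pt a b c (pseg p q t)).
    assert (Hw : Cmod (w - zs)%C <= 3 * h * span)
      by (rewrite Ezs; apply Cmod_tri_pt_sub, near_pseg; auto).
    replace (g w + (-1) * (g zs - lam * zs + lam * w))%C with (g w - g zs - (w - zs) * lam)%C by ring.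
    eapply Rle_trans; [apply Hdiff; lra|]. apply Rmult_le_compat_l; auto.
  - apply Rmult_le_compat_l; [apply Rmult_le_pos; [|apply Rmult_le_pos]; lra|].
    apply Cmod_tri_pt_sub; auto.
Qed.

Lemma nested_ptri_norm_upper X Y : in_simplex (X, Y) ->
  (forall k, near (2 * (/ 2) ^ k) (vertex1 (nested_ptri k)) (X, Y)) ->
  forall eps, 0 < eps -> exists k,
    ptri_norm (nested_ptri k) <= 9 * eps * span * span * ((/ 2) ^ k * (/ 2) ^ k).
Proof.
  intros HXY Hnear eps Heps. pose proof span_ge_0.
  set (zs := tri_pt a b c (X, Y)).
  destruct (holo_at_is_Cderive g zs (g_holo _ HXY)) as [lam Hlam].
  destruct (Hlam eps Heps) as [del [Hdel Hw]].
  destruct (half_pow_lt (del / (3 * span + 1))) as [k Hk]; [apply Rdiv_lt_0_compat; lra|].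
  exists k.
  set (h := (/ 2) ^ k). assert (Hh : 0 < h) by apply half_pow_pos.
  assert (Hhd : 3 * h * span < del).
  { assert (h * (3 * span + 1) < del); [|nra].
    apply Rmult_lt_reg_r with (/ (3 * span + 1)); [apply Rinv_0_lt_compat; lra|].
    rewrite Rmult_assoc, Rinv_r, Rmult_1_r by lra. exact Hk. }
  destruct (nested_ptri_props k) as [HI [HS _]]. pose proof (Hnear k) as Hk1.
  fold h in HS, Hk1. destruct (nested_ptri k) as [u1 u2 u3].
  simpl in HI, HS, Hk1. destruct HI as [I1 [I2 I3]]. destruct HS as [S12 [S23 S13]].
  assert (Hvert : forall u, near h u u1 -> near (3 * h) u (X, Y)).
  { intros u Hu. replace (3 * h) with (h + 2 * h) by ring. eapply near_trans; eauto. }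
  assert (C1 : near (3 * h) u1 (X, Y)) by (apply Hvert; unfold near; lra).
  assert (C2 : near (3 * h) u2 (X, Y)) by (apply Hvert, near_sym; auto).
  assert (C3 : near (3 * h) u3 (X, Y)) by (apply Hvert, near_sym; auto).
  unfold ptri_norm, ptri_int.
  rewrite (tri_int_sub_affine g (g zs - lam * zs) lam) by (apply Scont_tri_pt; auto).
  unfold tri_int.
  eapply Rle_trans; [apply Cmod_triangle|].
  eapply Rle_trans; [apply Rplus_le_compat_r, Cmod_triangle|].
  pose proof (cint_tangent_remainder zs lam eps del h u1 u2 X Y Hw eq_refl I1 I2 C1 C2
                (near_sym _ _ _ S12) Hhd ltac:(lra) ltac:(lra)).
  pose proof (cint_tangent_remainder zs lam eps del h u2 u3 X Y Hw eq_refl I2 I3 C2 C3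
                (near_sym _ _ _ S23) Hhd ltac:(lra) ltac:(lra)).
  pose proof (cint_tangent_remainder zs lam eps del h u3 u1 X Y Hw eq_refl I3 I1 C3 C1
                S13 Hhd ltac:(lra) ltac:(lra)).
  lra.
Qed.

End Goursat.

Theorem goursat g a b c :
  (forall u, in_simplex u -> holo_at g (tri_pt a b c u)) -> tri_int g a b c = RtoC 0.
Proof.
  intros Hg.
  destruct (nested_ptri_limit g a b c) as [X [Y [HXY Hnear]]].
  set (N0 := ptri_norm g a b c (nested_ptri g a b c 0)).
  set (K := Cmod (b - a)%C + Cmod (c - a)%C).
  assert (HK : 0 <= K) by (pose proof (Cmod_ge_0 (b - a)%C); pose proof (Cmod_ge_0 (c - a)%C); unfold K; lra).
  assert (Z : N0 <= 0).
  { destruct (Rle_dec N0 0) as [|Hgt]; [assumption | exfalso].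
    set (eps := N0 / (9 * K * K + 1)).
    assert (Heps : 0 < eps) by (apply Rdiv_lt_0_compat; nra).
    destruct (nested_ptri_norm_upper g a b c Hg X Y HXY Hnear eps Heps) as [k Hk].
    pose proof (nested_ptri_norm_lower g a b c Hg k) as Hl. fold N0 in Hl. fold K in Hk.
    set (h := (/ 2) ^ k) in *. assert (0 < h) by apply half_pow_pos.
    assert (N0 <= 9 * eps * K * K) by (apply Rmult_le_reg_r with (h * h); nra).
    assert (eps * (9 * K * K + 1) = N0) by (unfold eps; field; nra).
    nra. }
  apply Cmod_eq_0.
  replace (tri_int g a b c) with (ptri_int g a b c (nested_ptri g a b c 0)).
  - pose proof (Cmod_ge_0 (ptri_int g a b c (nested_ptri g a b c 0))). unfold N0, ptri_norm in *. lra.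
  - simpl. destruct (tri_pt_vertices a b c) as [-> [-> ->]]. reflexivity.
Qed.

(** * Triangles with one exceptional vertex *)

Lemma le_0_of_le_mul_small (x K d : R) : 0 < d -> (forall eps, 0 < eps < d -> x <= K * eps) -> x <= 0.
Proof.
  intros Hd H. destruct (Rle_dec x 0) as [|Hx]; [assumption | exfalso].
  pose proof (Rabs_pos K). pose proof (Rle_abs K).
  set (eps := Rmin (d / 2) (x / (2 * (Rabs K + 1)))).
  assert (He : 0 < eps) by (apply Rmin_pos; apply Rdiv_lt_0_compat; lra).
  assert (He1 : eps <= d / 2) by apply Rmin_l.
  assert (He2 : eps * (2 * (Rabs K + 1)) <= x).
  { apply Rle_trans with (x / (2 * (Rabs K + 1)) * (2 * (Rabs K + 1))).
    - apply Rmult_le_compat_r; [lra | apply Rmin_r].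
    - right; field; lra. }
  specialize (H eps ltac:(lra)). nra.
Qed.

Definition in_tri (p b c z : C) : Prop := exists u, in_simplex u /\ z = tri_pt p b c u.

Lemma tri_pt_eq_first p b c x y :
  Im (Cconj (b - p) * (c - p))%C <> 0 -> tri_pt p b c (x, y) = p -> x = 0 /\ y = 0.
Proof.
  intros HD E.
  set (D := Im (Cconj (b - p) * (c - p))%C) in HD.
  assert (E' : (RtoC x * (b - p) + RtoC y * (c - p))%C = RtoC 0).
  { replace (RtoC x * (b - p) + RtoC y * (c - p))%C with (tri_pt p b c (x, y) - p)%C
      by (unfold tri_pt; simpl; ring).
    rewrite E. ring. }
  assert (Hy : y * D = Im (Cconj (b - p) * (RtoC x * (b - p) + RtoC y * (c - p)))%C)
    by (unfold D; destruct p, b, c; simpl; ring).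
  assert (Hx : x * D = - Im (Cconj (c - p) * (RtoC x * (b - p) + RtoC y * (c - p)))%C)
    by (unfold D; destruct p, b, c; simpl; ring).
  rewrite E', Cmult_0_r in Hx, Hy. simpl in Hx, Hy.
  split; apply (Rmult_eq_reg_r D); lra.
Qed.

Section Corner.

Variables (g : C -> C) (p b c : C).
Hypothesis nondeg : Im (Cconj (b - p) * (c - p))%C <> 0.
Hypothesis g_cont : forall z, in_tri p b c z -> Ccont_at g z.
Hypothesis g_holo : forall z, in_tri p b c z -> z <> p -> holo_at g z.

Let P := tri_pt p b c.

Lemma Scont_in_tri u v : in_simplex u -> in_simplex v -> Scont g (P u) (P v).
Proof.
  intros Hu Hv t Ht. unfold P. rewrite tri_pt_pseg.
  apply g_cont. exists (pseg u v t). split; auto. apply in_simplex_pseg; auto.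
Qed.

(* Cut off the corner at [p]: the two remaining triangles avoid [p]. *)
Lemma tri_int_cut_corner eps : 0 < eps < 1 ->
  tri_int g p b c = (tri_int g p (P (eps, 0)) (P (0, eps)) +
                     tri_int g (P (eps, 0)) b c + tri_int g (P (eps, 0)) c (P (0, eps)))%C.
Proof.
  intros He.
  destruct (tri_pt_vertices p b c) as [Pp [Pb Pc]]. fold P in Pp, Pb, Pc.
  assert (I00 : in_simplex (0, 0)) by (unfold in_simplex; simpl; lra).
  assert (I10 : in_simplex (1, 0)) by (unfold in_simplex; simpl; lra).
  assert (I01 : in_simplex (0, 1)) by (unfold in_simplex; simpl; lra).
  assert (Ie0 : in_simplex (eps, 0)) by (unfold in_simplex; simpl; lra).
  assert (I0e : in_simplex (0, eps)) by (unfold in_simplex; simpl; lra).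
  unfold tri_int. rewrite <- Pp, <- Pb, <- Pc.
  rewrite (cint_split g (P (0, 0)) (P (1, 0)) eps) by (try apply Scont_in_tri; auto; lra).
  rewrite (cint_split g (P (0, 1)) (P (0, 0)) (1 - eps)) by (try apply Scont_in_tri; auto; lra).
  unfold P. rewrite !tri_pt_pseg.
  replace (pseg (0, 0) (1, 0) eps) with (eps, 0) by (unfold pseg; simpl; f_equal; ring).
  replace (pseg (0, 1) (0, 0) (1 - eps)) with (0, eps) by (unfold pseg; simpl; f_equal; ring).
  rewrite (cint_rev g (tri_pt p b c (eps, 0)) (tri_pt p b c (0, 1))),
          (cint_rev g (tri_pt p b c (eps, 0)) (tri_pt p b c (0, eps)))
    by (apply Scont_in_tri; auto).
  ring.
Qed.

Lemma tri_int_off_corner eps : 0 < eps < 1 ->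
  tri_int g (P (eps, 0)) b c = RtoC 0 /\ tri_int g (P (eps, 0)) c (P (0, eps)) = RtoC 0.
Proof.
  intros He.
  assert (Hsub : forall u, in_simplex u -> 0 < fst u \/ 0 < snd u -> holo_at g (P u)).
  { intros u Hu Hpos. apply g_holo; [exists u; split; auto|].
    intros E. destruct u as [x y]. apply tri_pt_eq_first in E; auto. simpl in Hpos. lra. }
  split; apply goursat; intros [x y] [Hx [Hy Hxy]]; simpl in Hx, Hy, Hxy.
  - replace (tri_pt (P (eps, 0)) b c (x, y)) with (P (eps * (1 - y) + x * (1 - eps), y))
      by (unfold P, tri_pt; apply Ceq; simpl; ring).
    apply Hsub; unfold in_simplex; simpl; [repeat split; nra | nra].
  - replace (tri_pt (P (eps, 0)) c (P (0, eps)) (x, y)) with (P (eps * (1 - x - y), x + y * eps))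
      by (unfold P, tri_pt; apply Ceq; simpl; ring).
    apply Hsub; unfold in_simplex; simpl; [repeat split; nra | nra].
Qed.

Lemma cint_near_apex_bound del eps u v :
  (forall w, Cmod (w - p)%C < del -> Cmod (g w - g p)%C < 1) ->
  eps * (Cmod (b - p)%C + Cmod (c - p)%C) < del ->
  in_simplex u -> in_simplex v -> near eps u (0, 0) -> near eps v (0, 0) -> near eps v u ->
  Cmod (cint g (P u) (P v)) <= (Cmod (g p) + 1) * (eps * (Cmod (b - p)%C + Cmod (c - p)%C)).
Proof.
  intros Hcont HeK Hu Hv Cu Cv Cuv.
  destruct (tri_pt_vertices p b c) as [Pp _].
  eapply Rle_trans; [apply (cint_bound _ _ _ (Cmod (g p) + 1)); [apply Scont_in_tri; auto|]|].
  - intros t Ht. unfold P. rewrite tri_pt_pseg.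
    set (w := tri_pt p b c (pseg u v t)).
    assert (Hw : Cmod (w - p)%C <= eps * (Cmod (b - p)%C + Cmod (c - p)%C))
      by (unfold w; rewrite <- Pp at 2; apply Cmod_tri_pt_sub, near_pseg; auto).
    specialize (Hcont w ltac:(lra)).
    pose proof (Cmod_triangle (g w - g p)%C (g p)) as T.
    replace (g w - g p + g p)%C with (g w) in T by ring. lra.
  - apply Rmult_le_compat_l; [pose proof (Cmod_ge_0 (g p)); lra | apply Cmod_tri_pt_sub; auto].
Qed.

Lemma tri_int_corner_small : exists B d, 0 < d <= 1 /\ forall eps, 0 < eps < d ->
  Cmod (tri_int g p (P (eps, 0)) (P (0, eps))) <= B * eps.
Proof.
  set (K := Cmod (b - p)%C + Cmod (c - p)%C).
  assert (HK : 0 <= K) by (pose proof (Cmod_ge_0 (b - p)%C); pose proof (Cmod_ge_0 (c - p)%C); unfold K; lra).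
  destruct (tri_pt_vertices p b c) as [Pp _]. fold P in Pp.
  assert (I00 : in_simplex (0, 0)) by (unfold in_simplex; simpl; lra).
  destruct (g_cont p (ex_intro _ (0, 0) (conj I00 (eq_sym Pp))) 1 Rlt_0_1) as [del [Hdel Hcont]].
  exists (3 * (Cmod (g p) + 1) * K), (Rmin 1 (del / (K + 1))).
  assert (Hd : 0 < del / (K + 1)) by (apply Rdiv_lt_0_compat; lra).
  split; [split; [apply Rmin_pos; lra | apply Rmin_l]|].
  intros eps He.
  assert (He1 : eps < 1) by (eapply Rlt_le_trans; [apply He | apply Rmin_l]).
  assert (HeK : eps * K < del).
  { assert (eps * (K + 1) < del); [|nra].
    apply Rmult_lt_reg_r with (/ (K + 1)); [apply Rinv_0_lt_compat; lra|].
    rewrite Rmult_assoc, Rinv_r, Rmult_1_r by lra.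
    eapply Rlt_le_trans; [apply He | apply Rmin_r]. }
  assert (Ie0 : in_simplex (eps, 0)) by (unfold in_simplex; simpl; lra).
  assert (I0e : in_simplex (0, eps)) by (unfold in_simplex; simpl; lra).
  assert (N0 : near eps (0, 0) (0, 0)) by (unfold near; simpl; lra).
  assert (N1 : near eps (eps, 0) (0, 0)) by (unfold near; simpl; lra).
  assert (N2 : near eps (0, eps) (0, 0)) by (unfold near; simpl; lra).
  assert (N12 : near eps (0, eps) (eps, 0)) by (unfold near; simpl; lra).
  pose proof (cint_near_apex_bound del eps _ _ Hcont HeK I00 Ie0 N0 N1 N1) as E1.
  pose proof (cint_near_apex_bound del eps _ _ Hcont HeK Ie0 I0e N1 N2 N12) as E2.
  pose proof (cint_near_apex_bound del eps _ _ Hcont HeK I0e I00 N2 N0 (near_sym _ _ _ N2)) as E3.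
  fold K in E1, E2, E3. rewrite Pp in E1, E3. unfold tri_int.
  eapply Rle_trans; [apply Cmod_triangle|].
  eapply Rle_trans; [apply Rplus_le_compat_r, Cmod_triangle|].
  replace (3 * (Cmod (g p) + 1) * K * eps) with (3 * ((Cmod (g p) + 1) * (eps * K))) by ring.
  lra.
Qed.

End Corner.

Lemma tri_int_corner g p b c :
  Im (Cconj (b - p) * (c - p))%C <> 0 ->
  (forall z, in_tri p b c z -> Ccont_at g z) ->
  (forall z, in_tri p b c z -> z <> p -> holo_at g z) ->
  tri_int g p b c = RtoC 0.
Proof.
  intros HD Hc Hh.
  destruct (tri_int_corner_small g p b c Hc) as [B [d [Hd Hsmall]]].
  apply Cmod_eq_0.
  assert (Cmod (tri_int g p b c) <= 0); [|pose proof (Cmod_ge_0 (tri_int g p b c)); lra].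
  apply (le_0_of_le_mul_small _ B d); [lra|].
  intros eps He. assert (He1 : 0 < eps < 1) by lra.
  rewrite (tri_int_cut_corner g p b c Hc eps He1).
  destruct (tri_int_off_corner g p b c HD Hh eps He1) as [-> ->].
  rewrite !Cplus_0_r. apply Hsmall, He.
Qed.

(** * Inscribed regular polygons *)

Fixpoint Csum (n : nat) (f : nat -> C) : C :=
  match n with O => RtoC 0 | S m => (Csum m f + f m)%C end.

Lemma Csum_telescope (n : nat) (A s : nat -> C) :
  Csum n (fun k => A k + (s k - s (S k)))%C = (Csum n A + (s O - s n))%C.
Proof. induction n; simpl; [|rewrite IHn]; ring. Qed.

Lemma Csum_ext n (f g : nat -> C) : (forall k, (k < n)%nat -> f k = g k) -> Csum n f = Csum n g.
Proof. induction n; simpl; intros H; auto. rewrite IHn, H; auto. Qed.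

Lemma Csum_0 n (f : nat -> C) : (forall k, (k < n)%nat -> f k = RtoC 0) -> Csum n f = RtoC 0.
Proof. induction n; simpl; intros H; auto. rewrite IHn, H by auto. ring. Qed.

Lemma Csum_plus n (f g : nat -> C) : Csum n (fun k => f k + g k)%C = (Csum n f + Csum n g)%C.
Proof. induction n; simpl; [|rewrite IHn]; ring. Qed.

Lemma Csum_scal n (c : C) (f : nat -> C) : Csum n (fun k => c * f k)%C = (c * Csum n f)%C.
Proof. induction n; simpl; [|rewrite IHn]; ring. Qed.

Lemma Cmod_Csum_le n (f : nat -> C) B : (forall k, (k < n)%nat -> Cmod (f k) <= B) ->
  Cmod (Csum n f) <= INR n * B.
Proof.
  induction n as [|n IH]; intros H; simpl Csum; [rewrite Cmod_0; simpl; lra|].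
  rewrite S_INR. eapply Rle_trans; [apply Cmod_triangle|].
  pose proof (IH (fun k Hk => H k ltac:(lia))). pose proof (H n ltac:(lia)). lra.
Qed.

Lemma Im_Csum_pos n (f : nat -> C) :
  (0 < n)%nat -> (forall k, (k < n)%nat -> 0 < Im (f k)) -> 0 < Im (Csum n f).
Proof.
  induction n as [|[|n] IH]; intros Hn H; [lia| |].
  - specialize (H 0%nat ltac:(lia)). simpl. unfold Im in *. lra.
  - change (Im (Csum (S (S n)) f)) with (Im (Csum (S n) f) + Im (f (S n))).
    assert (0 < Im (Csum (S n) f)) by (apply IH; [lia | intros; apply H; lia]).
    specialize (H (S n) ltac:(lia)). lra.
Qed.

Lemma Im_conj_mul_le (z e : C) : Im (Cconj z * e)%C <= Cmod z * Cmod e.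
Proof.
  rewrite <- (Cmod_conj z), <- Cmod_mult.
  eapply Rle_trans; [apply Rle_abs | apply Im_le_Cmod].
Qed.

Lemma Cmod_tri_pt_lt_1 p v w u : in_simplex u -> Cmod p < 1 -> Cmod v < 1 -> Cmod w < 1 ->
  Cmod (tri_pt p v w u) < 1.
Proof.
  destruct u as [x y]. intros [Hx [Hy Hxy]] Hp Hv Hw. simpl in Hx, Hy, Hxy.
  replace (tri_pt p v w (x, y)) with (RtoC (1 - x - y) * p + RtoC x * v + RtoC y * w)%C
    by (unfold tri_pt; apply Ceq; unfold Re, Im; simpl; ring).
  eapply Rle_lt_trans; [apply Cmod_triangle|].
  eapply Rle_lt_trans; [apply Rplus_le_compat_r, Cmod_triangle|].
  rewrite !Cmod_mult, !Cmod_R, !Rabs_pos_eq by lra.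
  destruct (Rlt_or_le 0 x); [nra|]. destruct (Rlt_or_le 0 y); nra.
Qed.

Lemma Cmod_seg_lt_1 p v t : Cmod p < 1 -> Cmod v < 1 -> 0 <= t <= 1 -> Cmod (seg p v t) < 1.
Proof.
  intros Hp Hv Ht.
  replace (seg p v t) with (tri_pt p v v (t, 0)) by (unfold seg, tri_pt; apply Ceq; simpl; ring).
  apply Cmod_tri_pt_lt_1; auto. unfold in_simplex; simpl; lra.
Qed.

Definition poly_vtx (rho th : R) (k : nat) : C := (rho * cos (INR k * th), rho * sin (INR k * th)).

Definition regular_poly (rho th : R) (N : nat) : Prop :=
  0 < rho < 1 /\ (3 <= N)%nat /\ th = 2 * PI / INR N.

(* [(rho cos (th / 2))^2], the squared inradius of the polygon. *)
Definition inradius2 (rho th : R) : R := rho * rho * (1 + cos th) / 2.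

Definition poly_int (g : C -> C) (rho th : R) (N : nat) : C :=
  Csum N (fun k => cint g (poly_vtx rho th k) (poly_vtx rho th (S k))).

Definition in_incircle (rho th : R) (z : C) : Prop := Cmod z * Cmod z < inradius2 rho th.

Section Polygon.

Variables (rho th : R) (N : nat).
Hypothesis Hpoly : regular_poly rho th N.

Let V := poly_vtx rho th.

Lemma poly_vtx_S k : V (S k) =
  (rho * (cos (INR k * th) * cos th - sin (INR k * th) * sin th),
   rho * (sin (INR k * th) * cos th + cos (INR k * th) * sin th)).
Proof.
  unfold V, poly_vtx. rewrite S_INR, Rmult_plus_distr_r, Rmult_1_l, cos_plus, sin_plus.
  reflexivity.
Qed.

Lemma Cmod_poly_vtx k : Cmod (V k) = rho.
Proof.
  destruct Hpoly as [Hr _]. unfold V, poly_vtx, Cmod. cbn [fst snd].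
  pose proof (sin2_cos2 (INR k * th)) as E. unfold Rsqr in E.
  replace ((rho * cos (INR k * th)) ^ 2 + (rho * sin (INR k * th)) ^ 2) with (rho ^ 2)
    by (rewrite <- (Rmult_1_r (rho ^ 2)), <- E; ring).
  apply sqrt_pow2; lra.
Qed.

Lemma poly_vtx_N : V N = V 0.
Proof.
  destruct Hpoly as [_ [HN Hth]]. unfold V, poly_vtx. simpl INR.
  assert (HN' : 0 < INR N) by (apply lt_0_INR; lia).
  replace (INR N * th) with (2 * PI) by (rewrite Hth; field; lra).
  rewrite cos_2PI, sin_2PI, Rmult_0_l, cos_0, sin_0. reflexivity.
Qed.

Lemma regular_poly_angle : 0 < sin th /\ -1 < cos th < 1.
Proof.
  destruct Hpoly as [_ [HN Hth]]. pose proof PI_RGT_0.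
  assert (HN' : 3 <= INR N) by (replace 3 with (INR 3) by (simpl; ring); apply le_INR; auto).
  assert (0 < th) by (rewrite Hth; apply Rdiv_lt_0_compat; lra).
  assert (th < PI).
  { rewrite Hth. apply Rmult_lt_reg_r with (INR N); [lra|].
    unfold Rdiv. rewrite Rmult_assoc, Rinv_l by lra. nra. }
  assert (Hs : 0 < sin th) by (apply sin_gt_0; auto).
  pose proof (sin2_cos2 th) as E. unfold Rsqr in E.
  split; [auto | split; nra].
Qed.

Lemma inradius2_pos : 0 < inradius2 rho th.
Proof.
  destruct regular_poly_angle as [_ Hc]. destruct Hpoly as [Hr _].
  unfold inradius2. apply Rdiv_lt_0_compat; [apply Rmult_lt_0_compat|]; nra.
Qed.

Lemma Cmod_poly_edge_sq k :
  Cmod (V (S k) - V k)%C * Cmod (V (S k) - V k)%C = 2 * (rho * rho) * (1 - cos th).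
Proof.
  rewrite Cmod_sq, poly_vtx_S. unfold V, poly_vtx, Im, Re; simpl.
  pose proof (sin2_cos2 (INR k * th)) as E. unfold Rsqr in E.
  pose proof (sin2_cos2 th) as E2. unfold Rsqr in E2.
  set (ca := cos (INR k * th)) in *. set (sa := sin (INR k * th)) in *.
  set (ct := cos th) in *. set (st := sin th) in *.
  transitivity (rho * rho * ((sa * sa + ca * ca) * (st * st + ct * ct) + (sa * sa + ca * ca)
                             - 2 * ct * (sa * sa + ca * ca))); [ring|].
  rewrite E, E2. ring.
Qed.

Lemma Im_conj_poly_vtx_S k : Im (Cconj (V k) * V (S k))%C = rho * rho * sin th.
Proof.
  rewrite poly_vtx_S. unfold V, poly_vtx, Cconj, Im, Re; simpl.
  pose proof (sin2_cos2 (INR k * th)) as E. unfold Rsqr in E.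
  rewrite <- (Rmult_1_r (rho * rho * sin th)), <- E. ring.
Qed.

(* Each edge, seen from a point [z] near the centre, turns counterclockwise. *)
Lemma Im_poly_edge_lower k (z : C) :
  rho * rho * sin th - Cmod z * Cmod (V (S k) - V k)%C <=
  Im (Cconj (V k - z) * (V (S k) - V k))%C.
Proof.
  replace (Im (Cconj (V k - z) * (V (S k) - V k))%C)
    with (Im (Cconj (V k) * V (S k))%C - Im (Cconj z * (V (S k) - V k))%C)
    by (destruct (V k), (V (S k)), z; unfold Cconj, Im, Re; simpl; ring).
  rewrite Im_conj_poly_vtx_S.
  pose proof (Im_conj_mul_le z (V (S k) - V k)%C). lra.
Qed.

Lemma Cmod_poly_edge k : Cmod (V (S k) - V k)%C = Cmod (V 1 - V 0)%C.
Proof. apply Rsqr_inj; try apply Cmod_ge_0. unfold Rsqr. rewrite !Cmod_poly_edge_sq. reflexivity. Qed.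

Lemma incircle_edge_lt (z : C) k : in_incircle rho th z ->
  Cmod z * Cmod (V (S k) - V k)%C < rho * rho * sin th.
Proof.
  intros Hz. destruct regular_poly_angle as [Hs Hc]. destruct Hpoly as [Hr _].
  unfold in_incircle, inradius2 in Hz.
  pose proof (Cmod_poly_edge_sq k) as He.
  pose proof (Cmod_ge_0 z). pose proof (Cmod_ge_0 (V (S k) - V k)%C).
  pose proof (sin2_cos2 th) as E. unfold Rsqr in E.
  apply Rsqr_incrst_0; unfold Rsqr; [| nra | nra].
  replace (Cmod z * Cmod (V (S k) - V k)%C * (Cmod z * Cmod (V (S k) - V k)%C))
    with (Cmod z * Cmod z * (Cmod (V (S k) - V k)%C * Cmod (V (S k) - V k)%C)) by ring.
  rewrite He.
  apply Rlt_le_trans with (rho * rho * (1 + cos th) / 2 * (2 * (rho * rho) * (1 - cos th))).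
  - apply Rmult_lt_compat_r; [nra | exact Hz].
  - right. transitivity (rho * rho * (rho * rho) * (1 - cos th * cos th)); [field|].
    replace (1 - cos th * cos th) with (sin th * sin th) by lra. ring.
Qed.

Lemma Im_poly_edge_pos (z : C) k : in_incircle rho th z ->
  0 < Im (Cconj (V k - z) * (V (S k) - V k))%C.
Proof.
  intros Hz. pose proof (Im_poly_edge_lower k z). pose proof (incircle_edge_lt z k Hz). lra.
Qed.

Lemma Im_poly_edge_le_dist (z : C) k t :
  Im (Cconj (V k - z) * (V (S k) - V k))%C <=
  Cmod (seg (V k) (V (S k)) t - z)%C * Cmod (V (S k) - V k)%C.
Proof.
  replace (Im (Cconj (V k - z) * (V (S k) - V k))%C)
    with (Im (Cconj (seg (V k) (V (S k)) t - z) * (V (S k) - V k))%C)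
    by (unfold seg; destruct (V k), (V (S k)), z; unfold Cconj, Im, Re; simpl; ring).
  apply Im_conj_mul_le.
Qed.

Lemma in_incircle_Cmod_lt_1 (z : C) : in_incircle rho th z -> Cmod z < 1.
Proof.
  intros Hz. destruct regular_poly_angle as [_ Hc]. destruct Hpoly as [Hr _].
  unfold in_incircle, inradius2 in Hz. pose proof (Cmod_ge_0 z).
  apply Rsqr_incrst_0; unfold Rsqr; nra.
Qed.

Lemma Cmod_poly_seg_lt_1 k t : 0 <= t <= 1 -> Cmod (seg (V k) (V (S k)) t) < 1.
Proof.
  intros Ht. destruct Hpoly as [Hr _].
  apply Cmod_seg_lt_1; auto; rewrite Cmod_poly_vtx; lra.
Qed.

Lemma sqrt_inradius2_le_Cmod_poly_seg k t :
  sqrt (inradius2 rho th) <= Cmod (seg (V k) (V (S k)) t).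
Proof.
  destruct regular_poly_angle as [Hs Hc]. destruct Hpoly as [Hr _].
  set (E := Cmod (V (S k) - V k)%C).
  set (Z := Cmod (seg (V k) (V (S k)) t)).
  pose proof (Im_poly_edge_le_dist (RtoC 0) k t) as H.
  replace (seg (V k) (V (S k)) t - RtoC 0)%C with (seg (V k) (V (S k)) t) in H by ring.
  replace (Im (Cconj (V k - RtoC 0) * (V (S k) - V k))%C) with (rho * rho * sin th) in H
    by (rewrite <- (Im_conj_poly_vtx_S k); destruct (V k), (V (S k)); unfold Cconj, Im, Re; simpl; ring).
  fold E Z in H.
  assert (HE : E * E = 2 * (rho * rho) * (1 - cos th)) by apply Cmod_poly_edge_sq.
  assert (HZ : 0 <= Z) by apply Cmod_ge_0. assert (HE0 : 0 <= E) by apply Cmod_ge_0.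
  rewrite <- (sqrt_square Z HZ). apply sqrt_le_1_alt. unfold inradius2.
  pose proof (sin2_cos2 th) as S2. unfold Rsqr in S2.
  assert (HEp : 0 < E * E) by (rewrite HE; apply Rmult_lt_0_compat; nra).
  assert (Hq : 0 < rho * rho * sin th) by (apply Rmult_lt_0_compat; nra).
  assert (rho * rho * sin th * (rho * rho * sin th) <= Z * Z * (E * E)).
  { replace (Z * Z * (E * E)) with ((Z * E) * (Z * E)) by ring. apply Rmult_le_compat; lra. }
  apply Rmult_le_reg_r with (E * E); auto. rewrite HE in *.
  replace (rho * rho * (1 + cos th) / 2 * (2 * (rho * rho) * (1 - cos th)))
    with (rho * rho * (rho * rho) * (sin th * sin th)); [nra|].
  replace (sin th * sin th) with (1 - cos th * cos th) by lra. field.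
Qed.

Lemma poly_int_fan (g : C -> C) (p : C) :
  (forall k, Scont g p (V k)) ->
  poly_int g rho th N = Csum N (fun k => tri_int g p (V k) (V (S k))).
Proof.
  intros Hc. unfold poly_int. fold V.
  rewrite (Csum_ext N (fun k => tri_int g p (V k) (V (S k)))
             (fun k => cint g (V k) (V (S k)) + (cint g p (V k) - cint g p (V (S k))))%C).
  - rewrite Csum_telescope, poly_vtx_N. ring.
  - intros k _. unfold tri_int. rewrite (cint_rev g p (V (S k))) by apply Hc. ring.
Qed.

(* Cauchy's theorem for the polygon, allowing one point [p] of mere continuity:
   fan the polygon into triangles with apex [p]. *)
Theorem poly_int_eq_0 (g : C -> C) (p : C) : in_incircle rho th p ->
  (forall z, Cmod z < 1 -> Ccont_at g z) -> (forall z, Cmod z < 1 -> z <> p -> holo_at g z) ->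
  poly_int g rho th N = RtoC 0.
Proof.
  intros Hin Hc Hh.
  assert (Hp : Cmod p < 1) by (apply in_incircle_Cmod_lt_1; auto).
  assert (VD : forall k, Cmod (V k) < 1) by (intros; rewrite Cmod_poly_vtx; apply Hpoly).
  assert (Htri : forall k z, in_tri p (V k) (V (S k)) z -> Cmod z < 1)
    by (intros k z [u [Hu ->]]; apply Cmod_tri_pt_lt_1; auto).
  rewrite (poly_int_fan g p) by (intros k s Hs; apply Hc, Cmod_seg_lt_1; auto).
  apply Csum_0. intros k _. apply tri_int_corner.
  - pose proof (Im_poly_edge_pos p k Hin).
    replace (Im (Cconj (V k - p) * (V (S k) - p))%C)
      with (Im (Cconj (V k - p) * (V (S k) - V k))%C); [lra|].
    destruct (V k), (V (S k)), p; unfold Cconj, Im, Re; simpl; ring.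
  - intros z Hz. apply Hc, (Htri k), Hz.
  - intros z Hz Hzp. apply Hh; [apply (Htri k), Hz | exact Hzp].
Qed.

Section PolyIntAlgebra.

Variables f g : C -> C.
Hypothesis f_cont : forall k, Scont f (V k) (V (S k)).

Lemma poly_int_plus : (forall k, Scont g (V k) (V (S k))) ->
  poly_int (fun z => f z + g z)%C rho th N = (poly_int f rho th N + poly_int g rho th N)%C.
Proof.
  intros Hg. unfold poly_int. rewrite <- Csum_plus. apply Csum_ext. intros k _. apply cint_plus; auto.
Qed.

Lemma poly_int_scal (c : C) : poly_int (fun z => c * f z)%C rho th N = (c * poly_int f rho th N)%C.
Proof.
  unfold poly_int. rewrite <- Csum_scal. apply Csum_ext. intros k _. apply cint_scal; auto.
Qed.

Lemma poly_int_bound M E :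
  (forall k t, 0 <= t <= 1 -> Cmod (f (seg (V k) (V (S k)) t)) <= M) ->
  (forall k, Cmod (V (S k) - V k)%C <= E) ->
  Cmod (poly_int f rho th N) <= INR N * (M * E).
Proof.
  intros HM HE. apply Cmod_Csum_le. intros k _.
  assert (HM0 : 0 <= M) by (eapply Rle_trans; [apply Cmod_ge_0 | apply (HM 0%nat 0); lra]).
  eapply Rle_trans; [apply cint_bound; auto | apply Rmult_le_compat_l; auto].
Qed.

End PolyIntAlgebra.

Lemma poly_int_ext f g :
  (forall k t, 0 <= t <= 1 -> f (seg (V k) (V (S k)) t) = g (seg (V k) (V (S k)) t)) ->
  poly_int f rho th N = poly_int g rho th N.
Proof.
  intros H. unfold poly_int. apply Csum_ext. intros k _. apply cint_ext. intros t Ht. apply H, Ht.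
Qed.

Lemma poly_seg_sub_ne_0 (a : C) k t : in_incircle rho th a -> (seg (V k) (V (S k)) t - a)%C <> RtoC 0.
Proof.
  intros Ha E. pose proof (Im_poly_edge_le_dist a k t). pose proof (Im_poly_edge_pos a k Ha).
  rewrite E, Cmod_0 in *. lra.
Qed.

Lemma Scont_poly_inv (a : C) k : in_incircle rho th a -> Scont (fun z => / (z - a))%C (V k) (V (S k)).
Proof.
  intros Ha t Ht. apply holo_cont, holo_inv; [apply holo_minus; [apply holo_id | apply holo_const]|].
  apply poly_seg_sub_ne_0, Ha.
Qed.

(* The winding number integral of the polygon around [a] is nonzero: each edge contributes
   a positive imaginary part. *)
Lemma Im_poly_int_inv_pos (a : C) : in_incircle rho th a ->
  0 < Im (poly_int (fun z => / (z - a))%C rho th N).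
Proof.
  intros Ha. destruct Hpoly as [_ [HN _]]. apply Im_Csum_pos; [lia|]. intros k _. fold V.
  set (e := (V (S k) - V k)%C).
  set (D := Im (Cconj (V k - a) * e)%C).
  assert (HD : 0 < D) by apply Im_poly_edge_pos, Ha.
  pose proof (is_RInt_Im _ _ _ _ (RInt_seg_correct _ _ _ (Scont_poly_inv a k Ha))) as HIm.
  rewrite <- (is_RInt_unique _ _ _ _ HIm).
  apply Rlt_le_trans with (RInt (fun _ => D / 4) 0 1).
  { rewrite RInt_const. unfold scal; simpl; unfold mult; simpl. lra. }
  apply RInt_le; [lra | apply ex_RInt_const | eexists; exact HIm |].
  intros t Ht. fold e.
  set (w := (seg (V k) (V (S k)) t - a)%C).
  assert (Hw : w <> RtoC 0) by apply poly_seg_sub_ne_0, Ha.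
  assert (Hw0 : 0 < Cmod w) by (apply Cmod_gt_0; auto).
  assert (Hw2 : Cmod w <= 2).
  { unfold w. eapply Rle_trans; [apply Cmod_triangle|]. rewrite Cmod_opp.
    pose proof (Cmod_poly_seg_lt_1 k t ltac:(lra)). pose proof (in_incircle_Cmod_lt_1 a Ha). lra. }
  replace (Im (/ w * e)%C) with (D / (Cmod w * Cmod w)).
  - unfold Rdiv. apply Rmult_le_compat_l; [lra|]. apply Rinv_le_contravar; nra.
  - rewrite Cmod_sq. unfold D, e, w, seg.
    assert (Hn : Re w * Re w + Im w * Im w <> 0) by (rewrite <- Cmod_sq; nra).
    unfold w, seg in Hn. destruct (V k), (V (S k)), a. unfold Cinv, Cconj, Re, Im in *; simpl in *.
    field. contradict Hn. nra.
Qed.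

End Polygon.

(** * Cauchy's integral formula and Schwarz's lemma *)

Definition C_eq_dec (x y : C) : {x = y} + {x <> y}.
Proof.
  destruct x as [x1 x2], y as [y1 y2].
  destruct (Req_EM_T x1 y1) as [->|E1]; [destruct (Req_EM_T x2 y2) as [->|E2]|];
    [left; reflexivity | right; intros E; inversion E; auto ..].
Defined.

Lemma exists_nat_gt (r : R) : exists n : nat, r < INR n.
Proof.
  destruct (archimed r) as [H1 _].
  destruct (Z_le_gt_dec (up r) 0) as [Hz|Hz].
  - exists 0%nat. simpl. apply IZR_le in Hz. lra.
  - exists (Z.to_nat (up r)). rewrite INR_IZR_INZ, Z2Nat.id by lia. lra.
Qed.

Lemma locally_neq (z p : C) : z <> p -> exists d, 0 < d /\ forall w, Cmod (w - z)%C < d -> w <> p.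
Proof.
  intros H. exists (Cmod (z - p)%C). split.
  - apply Cmod_gt_0. intros E. apply H. replace z with ((z - p) + p)%C by ring. rewrite E. ring.
  - intros w Hw ->. replace (p - z)%C with (- (z - p))%C in Hw by ring. rewrite Cmod_opp in Hw. lra.
Qed.

Definition diff_quot (G : C -> C) (a l : C) (z : C) : C :=
  if C_eq_dec z a then l else ((G z - G a) / (z - a))%C.

Lemma diff_quot_cont_at G a l : is_Cderive G a l -> Ccont_at (diff_quot G a l) a.
Proof.
  intros H eps Heps. destruct (H (eps / 2)) as [d [Hd Hw]]; [lra|].
  exists d. split; auto. intros w Hwa. unfold diff_quot.
  destruct (C_eq_dec a a) as [_|]; [|contradiction].
  destruct (C_eq_dec w a) as [->|Hne].
  - replace (l - l)%C with (RtoC 0) by ring. rewrite Cmod_0. auto.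
  - assert (Hn : (w - a)%C <> RtoC 0)
      by (intros E; apply Hne; replace w with ((w - a) + a)%C by ring; rewrite E; ring).
    replace ((G w - G a) / (w - a) - l)%C with ((G w - G a - (w - a) * l) / (w - a))%C
      by (field; auto).
    rewrite Cmod_div by auto.
    assert (Hp : 0 < Cmod (w - a)%C) by (apply Cmod_gt_0; auto).
    apply Rle_lt_trans with (eps / 2); [|lra].
    apply Rmult_le_reg_r with (Cmod (w - a)%C); auto.
    unfold Rdiv. rewrite Rmult_assoc, Rinv_l, Rmult_1_r by lra. apply Hw, Hwa.
Qed.

Lemma holo_diff_quot G a l z : z <> a -> holo_at G z -> holo_at (diff_quot G a l) z.
Proof.
  intros Hz HG. apply (holo_ext_loc (fun w => (G w - G a) / (w - a))%C).
  - destruct (locally_neq z a Hz) as [d [Hd Hw]]. exists d. split; auto. intros w Hwz.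
    unfold diff_quot. destruct (C_eq_dec w a) as [E|_]; [exfalso; eapply Hw; eauto | auto].
  - apply holo_div; [apply holo_minus; auto; apply holo_const|
                    apply holo_minus; [apply holo_id | apply holo_const]|].
    intros E. apply Hz. replace z with ((z - a) + a)%C by ring. rewrite E. ring.
Qed.

Lemma Ccont_diff_quot G a l z : is_Cderive G a l -> (z <> a -> holo_at G z) ->
  Ccont_at (diff_quot G a l) z.
Proof.
  intros Ha Hz. destruct (C_eq_dec z a) as [->|Hne].
  - apply diff_quot_cont_at, Ha.
  - apply holo_cont, holo_diff_quot; auto.
Qed.

Lemma diff_quot_eq G a l z : z <> a -> diff_quot G a l z = ((G z - G a) / (z - a))%C.
Proof. intros Hz. unfold diff_quot. destruct (C_eq_dec z a); [contradiction | reflexivity]. Qed.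

(* [Cpow_quot n u v = u^(n-1) + u^(n-2) v + ... + v^(n-1)]. *)
Fixpoint Cpow_quot (n : nat) (u v : C) : C :=
  match n with O => RtoC 0 | S m => (Cpow u m + v * Cpow_quot m u v)%C end.

Lemma Cpow_sub_factor n (u v : C) : (Cpow u n - Cpow v n = (u - v) * Cpow_quot n u v)%C.
Proof.
  induction n; simpl; [ring|].
  replace (u * Cpow u n - v * Cpow v n)%C with (u * Cpow u n - v * Cpow u n + v * (Cpow u n - Cpow v n))%C
    by ring.
  rewrite IHn. ring.
Qed.

Lemma holo_Cpow_quot n (v : C) z : holo_at (fun w => Cpow_quot n w v) z.
Proof.
  induction n; simpl; [apply holo_const|].
  apply (holo_plus (fun w => Cpow w n) (fun w => v * Cpow_quot n w v)%C);
    [apply (holo_pow (fun w => w)), holo_id | apply holo_mult; [apply holo_const | exact IHn]].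
Qed.

Lemma le_of_pow_mul_le (x y K C0 : R) : 0 <= x -> 0 < y -> 0 < K ->
  (forall n, x ^ n * K <= C0 * y ^ n) -> x <= y.
Proof.
  intros Hx Hy HK H. destruct (Rle_dec x y) as [|Hxy]; auto. exfalso.
  set (r := x / y).
  assert (Hr : 1 < r)
    by (apply Rmult_lt_reg_r with y; auto; unfold r, Rdiv; rewrite Rmult_assoc, Rinv_l; lra).
  assert (Bernoulli : forall n, 1 + INR n * (r - 1) <= r ^ n).
  { induction n; [simpl; lra|]. rewrite S_INR. simpl. pose proof (pos_INR n).
    assert (r * (1 + INR n * (r - 1)) <= r * r ^ n) by (apply Rmult_le_compat_l; lra).
    assert (0 <= INR n * ((r - 1) * (r - 1))) by (apply Rmult_le_pos; nra). nra. }
  destruct (exists_nat_gt (C0 / K / (r - 1))) as [n Hn].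
  specialize (H n). specialize (Bernoulli n).
  replace (x ^ n) with (r ^ n * y ^ n) in H by (rewrite <- Rpow_mult_distr; unfold r; f_equal; field; lra).
  assert (Hyn : 0 < y ^ n) by (apply pow_lt; auto).
  assert (r ^ n * K <= C0) by (apply Rmult_le_reg_r with (y ^ n); auto; nra).
  assert (C0 / K / (r - 1) * (r - 1) * K = C0) by (field; lra).
  assert (C0 / K / (r - 1) * (r - 1) * K < INR n * (r - 1) * K)
    by (apply Rmult_lt_compat_r; auto; apply Rmult_lt_compat_r; lra).
  nra.
Qed.

Lemma holo_factor_id (om : C -> C) :
  (forall z, Cmod z < 1 -> holo_at om z) -> om (RtoC 0) = RtoC 0 ->
  exists h, (forall z, om z = (h z * z)%C) /\ (forall z, Cmod z < 1 -> Ccont_at h z) /\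
            (forall z, Cmod z < 1 -> z <> RtoC 0 -> holo_at h z).
Proof.
  intros Hh H0.
  assert (H01 : Cmod (RtoC 0) < 1) by (rewrite Cmod_0; lra).
  destruct (holo_at_is_Cderive om (RtoC 0) (Hh _ H01)) as [l0 Hl0].
  exists (diff_quot om (RtoC 0) l0). split; [|split].
  - intros z. unfold diff_quot. destruct (C_eq_dec z (RtoC 0)) as [->|Hz]; rewrite H0; [ring|].
    field. exact Hz.
  - intros z Hz. apply Ccont_diff_quot; auto.
  - intros z Hz Hz0. apply holo_diff_quot; auto.
Qed.

Section PolygonCauchy.

Variables (rho th : R) (N : nat).
Hypothesis Hpoly : regular_poly rho th N.

Lemma in_incircle_0 : in_incircle rho th (RtoC 0).
Proof. unfold in_incircle. rewrite Cmod_0, Rmult_0_l. apply (inradius2_pos rho th N Hpoly). Qed.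

Lemma Scont_poly_edge f k : (forall z, Cmod z < 1 -> Ccont_at f z) -> Scont f (poly_vtx rho th k) (poly_vtx rho th (S k)).
Proof. intros Hf t Ht. apply Hf, (Cmod_poly_seg_lt_1 rho th N Hpoly k t Ht). Qed.

Lemma poly_cauchy_formula (G : C -> C) (a : C) : in_incircle rho th a ->
  (forall z, Cmod z < 1 -> holo_at G z) ->
  (G a * poly_int (fun z => / (z - a)) rho th N)%C = poly_int (fun z => G z * / (z - a))%C rho th N.
Proof.
  intros Ha HG.
  assert (Ha1 : Cmod a < 1) by (apply (in_incircle_Cmod_lt_1 rho th N Hpoly), Ha).
  destruct (holo_at_is_Cderive G a (HG a Ha1)) as [la Hla].
  set (q := diff_quot G a la).
  assert (Hq : forall z, Cmod z < 1 -> Ccont_at q z) by (intros; apply Ccont_diff_quot; auto).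
  assert (Hinv : forall k, Scont (fun z => G a * / (z - a))%C (poly_vtx rho th k) (poly_vtx rho th (S k)))
    by (intros k t Ht; apply Ccont_mult; [apply Ccont_const | apply (Scont_poly_inv rho th N Hpoly a k Ha t Ht)]).
  rewrite <- (Cplus_0_l (G a * _)%C), <- (poly_int_eq_0 rho th N Hpoly q a Ha Hq)
    by (intros; apply holo_diff_quot; auto).
  rewrite <- (poly_int_scal rho th N (fun z => / (z - a))%C) by (intros k; apply (Scont_poly_inv rho th N Hpoly), Ha).
  rewrite <- poly_int_plus by (auto; intros k; apply Scont_poly_edge, Hq).
  apply poly_int_ext. intros k t Ht.
  pose proof (poly_seg_sub_ne_0 rho th N Hpoly a k t Ha) as Hne.
  unfold q. rewrite diff_quot_eq by (intros E; apply Hne; rewrite E; ring).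
  field. exact Hne.
Qed.

(* With [om z = h z * z], the Cauchy integral of [om^n] at [a] only sees [a^n h^n]:
   the difference [h^n (z^n - a^n) / (z - a)] is continuous and holomorphic off [0]. *)
Lemma poly_int_pow_factor (h : C -> C) (a : C) n : in_incircle rho th a ->
  (forall z, Cmod z < 1 -> Ccont_at h z) -> (forall z, Cmod z < 1 -> z <> RtoC 0 -> holo_at h z) ->
  poly_int (fun z => Cpow (h z * z) n * / (z - a))%C rho th N =
  (Cpow a n * poly_int (fun z => Cpow (h z) n * / (z - a)) rho th N)%C.
Proof.
  intros Ha Hc Hh.
  set (Q := fun z => (Cpow (h z) n * Cpow_quot n z a)%C).
  assert (HS : forall z, Cmod z < 1 -> Ccont_at Q z)
    by (intros; apply Ccont_mult; [apply Ccont_pow; auto | apply holo_cont, holo_Cpow_quot]).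
  assert (Hq : forall k, Scont (fun z => Cpow (h z) n * / (z - a))%C (poly_vtx rho th k) (poly_vtx rho th (S k))).
  { intros k t Ht. apply Ccont_mult; [apply Ccont_pow, Hc, (Cmod_poly_seg_lt_1 rho th N Hpoly k t Ht)|].
    apply (Scont_poly_inv rho th N Hpoly a k Ha t Ht). }
  rewrite <- (Cplus_0_l (Cpow a n * _)%C),
    <- (poly_int_eq_0 rho th N Hpoly Q (RtoC 0) in_incircle_0 HS)
    by (intros z Hz Hz0; apply holo_mult; [apply holo_pow; auto | apply holo_Cpow_quot]).
  rewrite <- (poly_int_scal rho th N _ Hq), <- (poly_int_plus rho th N Q)
    by (intros k; first [apply Scont_poly_edge, HS | intros t Ht; apply Ccont_mult; [apply Ccont_const | apply Hq, Ht]]).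
  apply poly_int_ext. intros k t Ht.
  pose proof (poly_seg_sub_ne_0 rho th N Hpoly a k t Ha) as Hne.
  set (z := seg (poly_vtx rho th k) (poly_vtx rho th (S k)) t) in *. unfold Q. fold z.
  pose proof (Cpow_sub_factor n z a) as F. rewrite Cpow_mult_l.
  set (X := Cpow (h z) n) in *. set (Y := Cpow z n) in *. set (A := Cpow a n) in *.
  set (P := Cpow_quot n z a) in *.
  replace Y with (A + (z - a) * P)%C by (rewrite <- F; ring).
  field. exact Hne.
Qed.

Lemma poly_seg_dist_lower (a : C) : in_incircle rho th a ->
  exists d, 0 < d /\ forall k t, d <= Cmod (seg (poly_vtx rho th k) (poly_vtx rho th (S k)) t - a)%C.
Proof.
  intros Ha.
  set (E := Cmod (poly_vtx rho th 1 - poly_vtx rho th 0)%C).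
  pose proof (incircle_edge_lt rho th N Hpoly a 0 Ha) as Hlt. fold E in Hlt.
  assert (HE0 : 0 < E).
  { pose proof (Cmod_poly_edge_sq rho th 0) as Hsq.
    destruct (regular_poly_angle rho th N Hpoly) as [_ Hc]. destruct Hpoly as [Hr _].
    assert (0 < 2 * (rho * rho) * (1 - cos th)) by (apply Rmult_lt_0_compat; nra).
    assert (0 <= E) by apply Cmod_ge_0. fold E in Hsq. nra. }
  exists ((rho * rho * sin th - Cmod a * E) / E). split; [apply Rdiv_lt_0_compat; lra|].
  intros k t. pose proof (Im_poly_edge_lower rho th k a) as H1.
  pose proof (Im_poly_edge_le_dist rho th a k t) as H2. rewrite Cmod_poly_edge in H1, H2. fold E in H1, H2.
  apply Rmult_le_reg_r with E; auto. unfold Rdiv. rewrite Rmult_assoc, Rinv_l by lra. lra.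
Qed.

Lemma Cmod_poly_int_pow_inv_le (h : C -> C) (a : C) (M d : R) n : in_incircle rho th a ->
  (forall z, Cmod z < 1 -> Ccont_at h z) ->
  (forall k t, 0 <= t <= 1 -> Cmod (h (seg (poly_vtx rho th k) (poly_vtx rho th (S k)) t)) <= M) ->
  0 < d -> (forall k t, d <= Cmod (seg (poly_vtx rho th k) (poly_vtx rho th (S k)) t - a)%C) ->
  Cmod (poly_int (fun z => Cpow (h z) n * / (z - a)) rho th N)%C
    <= INR N * (M ^ n * / d * Cmod (poly_vtx rho th 1 - poly_vtx rho th 0)%C).
Proof.
  intros Ha Hc HM Hd Hdist. apply poly_int_bound.
  - intros k t Ht. apply Ccont_mult.
    + apply Ccont_pow, Hc, (Cmod_poly_seg_lt_1 rho th N Hpoly k t Ht).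
    + apply (Scont_poly_inv rho th N Hpoly a k Ha t Ht).
  - intros k t Ht. pose proof (Hdist k t).
    rewrite Cmod_mult, Cmod_pow, Cmod_inv by (apply (poly_seg_sub_ne_0 rho th N Hpoly), Ha).
    apply Rmult_le_compat; [apply pow_le, Cmod_ge_0 | left; apply Rinv_0_lt_compat; lra | |].
    + apply pow_incr. split; [apply Cmod_ge_0 | apply HM, Ht].
    + apply Rinv_le_contravar; lra.
  - intros k. rewrite Cmod_poly_edge. lra.
Qed.

Lemma Cmod_factor_le_on_poly (om h : C -> C) :
  (forall z, om z = (h z * z)%C) -> (forall z, Cmod z < 1 -> Cmod (om z) <= 1) ->
  forall k t, 0 <= t <= 1 ->
  Cmod (h (seg (poly_vtx rho th k) (poly_vtx rho th (S k)) t)) <= / sqrt (inradius2 rho th).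
Proof.
  intros Hom Hb k t Ht. set (z := seg (poly_vtx rho th k) (poly_vtx rho th (S k)) t).
  pose proof (sqrt_inradius2_le_Cmod_poly_seg rho th N Hpoly k t) as Hz. fold z in Hz.
  assert (Hmm : 0 < sqrt (inradius2 rho th)) by (apply sqrt_lt_R0, (inradius2_pos rho th N Hpoly)).
  apply Rmult_le_reg_r with (sqrt (inradius2 rho th)); auto. rewrite Rinv_l by lra.
  apply Rle_trans with (Cmod (h z) * Cmod z); [apply Rmult_le_compat_l; auto; apply Cmod_ge_0|].
  rewrite <- Cmod_mult, <- Hom. apply Hb, (Cmod_poly_seg_lt_1 rho th N Hpoly k t Ht).
Qed.

(* Landau's trick applied to the Cauchy formula for [om^n]. *)
Lemma Cmod_mul_sqrt_inradius2_le (om : C -> C) (a : C) :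
  (forall z, Cmod z < 1 -> holo_at om z) -> (forall z, Cmod z < 1 -> Cmod (om z) <= 1) ->
  om (RtoC 0) = RtoC 0 -> in_incircle rho th a ->
  Cmod (om a) * sqrt (inradius2 rho th) <= Cmod a.
Proof.
  intros Hh Hb H0 Ha.
  destruct (C_eq_dec a (RtoC 0)) as [->|Ha0]; [rewrite H0, Cmod_0; lra|].
  set (mm := sqrt (inradius2 rho th)).
  assert (Hmm : 0 < mm) by (apply sqrt_lt_R0, (inradius2_pos rho th N Hpoly)).
  destruct (holo_factor_id om Hh H0) as [h [Hom [Hh_cont Hh_holo]]].
  pose proof (Cmod_factor_le_on_poly om h Hom Hb) as Hh_bound. fold mm in Hh_bound.
  destruct (poly_seg_dist_lower a Ha) as [d [Hd Hdist]].
  set (W := poly_int (fun z => / (z - a))%C rho th N).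
  assert (HW : 0 < Cmod W).
  { pose proof (Im_poly_int_inv_pos rho th N Hpoly a Ha) as HIm. fold W in HIm.
    pose proof (Im_le_Cmod W). pose proof (Rle_abs (Im W)). lra. }
  set (E := Cmod (poly_vtx rho th 1 - poly_vtx rho th 0)%C).
  assert (HE : 0 <= E) by apply Cmod_ge_0.
  apply (le_of_pow_mul_le _ _ (Cmod W) (INR N * (/ d * E)));
    [apply Rmult_le_pos; [apply Cmod_ge_0 | lra] | apply Cmod_gt_0, Ha0 | exact HW |].
  intros n.
  assert (Key : (Cpow (om a) n * W)%C =
                (Cpow a n * poly_int (fun z => Cpow (h z) n * / (z - a)) rho th N)%C).
  { unfold W. rewrite (poly_cauchy_formula (fun z => Cpow (om z) n)) by (auto; intros; apply holo_pow; auto).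
    rewrite <- poly_int_pow_factor by auto.
    apply poly_int_ext. intros k t _. rewrite Hom. reflexivity. }
  pose proof (Cmod_poly_int_pow_inv_le h a (/ mm) d n Ha Hh_cont Hh_bound Hd Hdist) as Bound.
  fold E in Bound.
  apply (f_equal Cmod) in Key. rewrite !Cmod_mult, !Cmod_pow in Key. fold W in Key.
  assert (Hmn : 0 < mm ^ n) by (apply pow_lt; auto).
  assert (Einv : (/ mm) ^ n * mm ^ n = 1) by (rewrite <- Rpow_mult_distr, Rinv_l, pow1; lra).
  pose proof (pow_le (Cmod a) n (Cmod_ge_0 a)).
  rewrite Rpow_mult_distr.
  apply Rle_trans with (mm ^ n * (Cmod a ^ n * (INR N * ((/ mm) ^ n * / d * E)))).
  - replace (Cmod (om a) ^ n * mm ^ n * Cmod W) with (mm ^ n * (Cmod (om a) ^ n * Cmod W)) by ring.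
    rewrite Key. apply Rmult_le_compat_l; [lra|]. apply Rmult_le_compat_l; auto.
  - right. transitivity (INR N * (/ d * E) * Cmod a ^ n * ((/ mm) ^ n * mm ^ n)); [ring|].
    rewrite Einv. ring.
Qed.

End PolygonCauchy.

Lemma cos_ge_1_sub_sq x : - PI / 2 <= x -> x <= PI / 2 -> 1 - x * x / 2 <= cos x.
Proof.
  intros H1 H2. destruct (cos_bound x 0 H1 H2) as [H _].
  unfold cos_approx, cos_term in H. simpl in H. lra.
Qed.

Lemma regular_poly_inradius_gt (c : R) : 0 < c < 1 ->
  exists rho th N, regular_poly rho th N /\ c * c <= inradius2 rho th.
Proof.
  intros Hc.
  set (r2 := (1 + c * c) / 2).
  assert (Hr2 : c * c < r2 < 1) by (unfold r2; nra).
  set (rho := sqrt r2).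
  assert (Hrho2 : rho * rho = r2) by (apply sqrt_sqrt; nra).
  assert (Hrho : 0 < rho < 1).
  { split; [apply sqrt_lt_R0; nra|]. rewrite <- sqrt_1. apply sqrt_lt_1_alt; nra. }
  set (kap := 2 * (c * c) / r2 - 1).
  assert (Hk : kap < 1).
  { unfold kap. apply Rlt_le_trans with (2 * r2 / r2 - 1); [|right; field; nra].
    apply Rplus_lt_compat_r. unfold Rdiv. apply Rmult_lt_compat_r; [apply Rinv_0_lt_compat|]; nra. }
  pose proof PI_RGT_0.
  destruct (exists_nat_gt (2 * PI * PI / (1 - kap) + 4)) as [N HN].
  assert (Hpos : 0 < 2 * PI * PI / (1 - kap)) by (apply Rdiv_lt_0_compat; nra).
  set (th := 2 * PI / INR N).
  exists rho, th, N. split.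
  { split; [auto | split; [|reflexivity]].
    destruct (le_lt_dec 3 N) as [|Hl]; auto. apply lt_INR in Hl. simpl in Hl. lra. }
  assert (Hth0 : 0 < th) by (unfold th; apply Rdiv_lt_0_compat; lra).
  assert (Hth : th <= PI / 2).
  { unfold th. apply Rmult_le_reg_r with (INR N); [lra|].
    unfold Rdiv. rewrite Rmult_assoc, Rinv_l by lra. nra. }
  pose proof (cos_ge_1_sub_sq th ltac:(lra) Hth) as Hcos.
  assert (Hth2 : th * th <= 2 * (1 - kap)).
  { replace (th * th) with (4 * PI * PI / (INR N * INR N)) by (unfold th; field; lra).
    apply Rmult_le_reg_r with (INR N * INR N); [nra|].
    unfold Rdiv. rewrite Rmult_assoc, Rinv_l by nra.
    assert (2 * PI * PI / (1 - kap) * (1 - kap) = 2 * PI * PI) by (field; lra).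
    assert (2 * PI * PI < INR N * (1 - kap)).
    { apply Rle_lt_trans with (2 * PI * PI / (1 - kap) * (1 - kap)); [lra|].
      apply Rmult_lt_compat_r; lra. }
    nra. }
  unfold inradius2. rewrite Hrho2.
  assert (kap * r2 = 2 * (c * c) - r2) by (unfold kap; field; nra).
  nra.
Qed.

Theorem schwarz_lemma (om : C -> C) :
  (forall z, Cmod z < 1 -> holo_at om z) -> (forall z, Cmod z < 1 -> Cmod (om z) <= 1) ->
  om (RtoC 0) = RtoC 0 -> forall a, Cmod a < 1 -> Cmod (om a) <= Cmod a.
Proof.
  intros Hh Hb H0 a Ha. pose proof (Cmod_ge_0 a) as Ha0.
  assert (Hc : forall c, Cmod a < c < 1 -> Cmod (om a) * c <= Cmod a).
  { intros c Hc. destruct (regular_poly_inradius_gt c ltac:(lra))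
      as [rho [th [N [HP Hm]]]].
    assert (Hin : in_incircle rho th a) by (unfold in_incircle; nra).
    pose proof (Cmod_mul_sqrt_inradius2_le rho th N HP om a Hh Hb H0 Hin) as Hs.
    assert (c <= sqrt (inradius2 rho th))
      by (rewrite <- (sqrt_square c) by lra; apply sqrt_le_1_alt; lra).
    pose proof (Cmod_ge_0 (om a)). nra. }
  assert (Cmod (om a) - Cmod a <= 0); [|lra].
  apply (le_0_of_le_mul_small _ 1 (1 - Cmod a)); [lra|]. intros eps He.
  specialize (Hc (1 - eps) ltac:(lra)). pose proof (Hb a Ha). nra.
Qed.

(** * Composition operators on the Carathéodory class *)

Lemma Cmod_le_mul_of_bounded (phi : C -> C) (r : R) : 0 < r ->
  (forall z, Cmod z < 1 -> holo_at phi z) -> (forall z, Cmod z < 1 -> Cmod (phi z) <= r) ->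
  phi (RtoC 0) = RtoC 0 -> forall z, Cmod z < 1 -> Cmod (phi z) <= r * Cmod z.
Proof.
  intros Hr Hh Hb H0 z Hz.
  assert (Hr' : 0 < / r) by (apply Rinv_0_lt_compat, Hr).
  assert (Hs : Cmod (phi z * RtoC (/ r))%C <= Cmod z).
  { apply (schwarz_lemma (fun w => phi w * RtoC (/ r))%C); auto.
    - intros w Hw. apply holo_mult; [apply Hh, Hw | apply holo_const].
    - intros w Hw. rewrite Cmod_mult, Cmod_R, Rabs_pos_eq by lra.
      apply Rmult_le_reg_r with r; [lra|]. rewrite Rmult_assoc, Rinv_l by lra.
      rewrite Rmult_1_r, Rmult_1_l. apply Hb, Hw.
    - rewrite H0. ring. }
  rewrite Cmod_mult, Cmod_R, Rabs_pos_eq in Hs by lra.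
  apply Rmult_le_reg_r with (/ r); [exact Hr'|].
  replace (r * Cmod z * / r) with (Cmod z) by (field; lra). exact Hs.
Qed.

Lemma cayley_Re_pos_Cmod_le (f : C -> C) : classP f ->
  forall z, Cmod z < 1 -> Cmod ((f z - 1) / (f z + 1))%C <= Cmod z.
Proof.
  intros [Hfa [Hfre Hf0]].
  assert (Hne : forall w, Cmod w < 1 -> (f w + 1)%C <> RtoC 0).
  { intros w Hw E. pose proof (Hfre w Hw) as H. apply (f_equal Re) in E.
    destruct (f w) as [x y]. unfold Re in H, E; simpl in H, E. lra. }
  apply (schwarz_lemma (fun w => (f w - 1) / (f w + 1))%C).
  - intros w Hw. apply holo_div; [| |apply Hne, Hw];
      [apply holo_minus | apply holo_plus]; try apply Hfa, Hw; apply holo_const.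
  - intros w Hw. rewrite Cmod_div by (apply Hne, Hw).
    assert (Hp : 0 < Cmod (f w + 1)%C) by (apply Cmod_gt_0, Hne, Hw).
    apply Rmult_le_reg_r with (Cmod (f w + 1)%C); auto.
    unfold Rdiv. rewrite Rmult_assoc, Rinv_l, Rmult_1_r, Rmult_1_l by lra.
    apply Rsqr_incr_0; try apply Cmod_ge_0. unfold Rsqr. rewrite !Cmod_sq.
    pose proof (Hfre w Hw). destruct (f w) as [x y]. unfold Re, Im in *; simpl in *. nra.
  - rewrite Hf0. apply Ceq; unfold Re, Im; simpl; field.
Qed.

Lemma Re_mul_cayley (w o : C) : (1 - o)%C <> RtoC 0 ->
  Re (w * ((1 + o) / (1 - o)))%C =
  (Re w * (1 - Cmod o * Cmod o) - 2 * Im w * Im o) / (Cmod (1 - o)%C * Cmod (1 - o)%C).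
Proof.
  intros Hne. rewrite !Cmod_sq.
  assert (Hn : Re (1 - o)%C * Re (1 - o)%C + Im (1 - o)%C * Im (1 - o)%C <> 0)
    by (rewrite <- Cmod_sq; intros E; apply Hne, Cmod_eq_0; nra).
  destruct w as [x y], o as [p q]. unfold Cdiv, Cinv, Re, Im in *; simpl in *. field. contradict Hn. nra.
Qed.

(* The numerator in [Re_mul_cayley] is at least [Re w (r - |o|) (|o| + 1/r)]. *)
Lemma Re_sector_mul_cayley_pos (w o : C) (r : R) : 0 < Re w ->
  Rabs (Im w) <= (/ r - r) / 2 * Re w -> Cmod o < r ->
  0 < Re (w * ((1 + o) / (1 - o)))%C.
Proof.
  intros Hx Hy Ho.
  set (v := (/ r - r) / 2) in Hy. set (s := Cmod o) in *.
  pose proof (Cmod_ge_0 o) as Hs. fold s in Hs.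
  assert (Hr : 0 < r) by lra.
  assert (Hir : r * / r = 1) by (field; lra).
  assert (Hv : 0 <= v) by (pose proof (Rabs_pos (Im w)); nra).
  assert (Hne : (1 - o)%C <> RtoC 0).
  { intros E. assert (Ho1 : o = RtoC 1) by (replace o with (1 - (1 - o))%C by ring; rewrite E; ring).
    assert (s = 1) by (unfold s; rewrite Ho1; apply Cmod_1). unfold v in Hv. nra. }
  rewrite Re_mul_cayley by exact Hne.
  apply Rdiv_lt_0_compat; [| pose proof (proj1 (Cmod_gt_0 _) Hne); nra].
  assert (Hq : Rabs (Im o) <= s) by (apply Im_le_Cmod).
  assert (Im w * Im o <= v * Re w * s).
  { eapply Rle_trans; [apply Rle_abs|]. rewrite Rabs_mult.
    apply Rmult_le_compat; auto using Rabs_pos. }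
  assert (E : 1 - s * s - 2 * v * s = (r - s) * (s + / r)) by (unfold v; field; lra).
  assert (0 < Re w * (1 - s * s - 2 * v * s)).
  { rewrite E. apply Rmult_lt_0_compat; [lra|].
    apply Rmult_lt_0_compat; [|pose proof (Rinv_0_lt_compat r Hr)]; lra. }
  fold s. nra.
Qed.

Lemma Rabs_atan t : Rabs (atan t) = atan (Rabs t).
Proof.
  unfold Rabs. destruct (Rcase_abs t) as [Ht|Ht]; destruct (Rcase_abs (atan t)) as [Ha|Ha].
  - symmetry. apply atan_opp.
  - exfalso. pose proof (atan_increasing t 0 Ht) as Hlt. rewrite atan_0 in Hlt. lra.
  - exfalso. destruct (Rle_lt_or_eq_dec 0 t (Rge_le _ _ Ht)) as [Hp|<-].
    + pose proof (atan_increasing 0 t Hp) as Hlt. rewrite atan_0 in Hlt. lra.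
    + rewrite atan_0 in Ha. lra.
  - reflexivity.
Qed.

Lemma Rabs_le_of_Rabs_atan_le t v : Rabs (atan t) <= atan v -> Rabs t <= v.
Proof.
  rewrite Rabs_atan. intros H. destruct (Rle_lt_dec (Rabs t) v) as [|Hlt]; auto.
  pose proof (atan_increasing _ _ Hlt). lra.
Qed.

Lemma Rabs_Im_le_of_Carg (w : C) (v : R) : 0 < Re w -> Rabs (Carg w) <= atan v ->
  Rabs (Im w) <= v * Re w.
Proof.
  intros Hx H.
  assert (E : Carg w = atan (Im w / Re w)).
  { unfold Carg. destruct (Rlt_dec 0 (fst w)) as [_|Hn]; [reflexivity | unfold Re in Hx; contradiction]. }
  rewrite E in H. apply Rabs_le_of_Rabs_atan_le in H.
  replace (Im w) with (Im w / Re w * Re w) by (field; lra).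
  rewrite Rabs_mult, (Rabs_pos_eq (Re w)) by lra. apply Rmult_le_compat_r; lra.
Qed.

Lemma asin_eq_atan (R : R) : 0 <= R < 1 ->
  asin (2 * R / (1 + R ^ 2)) = atan (2 * R / (1 - R ^ 2)).
Proof.
  intros HR.
  assert (H1 : 0 < 1 + R ^ 2) by nra. assert (H2 : 0 < 1 - R ^ 2) by nra.
  rewrite asin_atan.
  - f_equal. unfold Rsqr.
    replace (1 - 2 * R / (1 + R ^ 2) * (2 * R / (1 + R ^ 2)))
      with (((1 - R ^ 2) / (1 + R ^ 2)) * ((1 - R ^ 2) / (1 + R ^ 2))) by (field; lra).
    rewrite sqrt_square by (apply Rdiv_le_0_compat; lra). field. split; lra.
  - split; [apply Rlt_le_trans with 0; [lra | apply Rdiv_le_0_compat; lra]|].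
    apply Rmult_lt_reg_r with (1 + R ^ 2); auto.
    unfold Rdiv. rewrite Rmult_assoc, Rinv_l by lra. nra.
Qed.

Lemma cayley_inv (w : C) : (w + 1)%C <> RtoC 0 ->
  w = ((1 + (w - 1) / (w + 1)) / (1 - (w - 1) / (w + 1)))%C.
Proof.
  intros H. field. split; [exact H|].
  replace (w + 1 - (w - 1))%C with (RtoC 2) by (apply Ceq; simpl; ring).
  intros E. apply (f_equal Re) in E. simpl in E. lra.
Qed.

Theorem proposition3p5
  (F : C -> C) (K R : R) (phi : C -> C) :
  classP F ->
  (* K = sup_{z in D} |arg F(z)| *)
  is_lub (fun k => exists z, inD z /\ k = Rabs (Carg (F z))) K ->
  K < PI / 2 ->
  0 <= R < 1 ->
  K = asin (2 * R / (1 + R ^ 2)) ->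
  schwarz_type phi ->
  (* ||phi||_oo <= (1-R)/(1+R) *)
  (forall z, inD z -> Cmod (phi z) <= (1 - R) / (1 + R)) ->
  forall f : C -> C, classP f -> classP (T_op F phi f).
Proof.
  (* [K < PI / 2] follows from [R < 1]. *)
  intros [HFa [HFre HF0]] Hlub _ HR HKe [Hpa [Hpd Hp0]] Hpb f Hf.
  pose proof Hf as [Hfa [Hfre Hf0]]. unfold inD in *.
  set (r := (1 - R) / (1 + R)) in *.
  assert (Hr : 0 < r) by (apply Rdiv_lt_0_compat; lra).
  assert (HKr : K = atan ((/ r - r) / 2))
    by (rewrite HKe, asin_eq_atan by auto; f_equal; unfold r; field; split; nra).
  split; [|split].
  - intros z Hz. apply holo_mult; [apply HFa, Hz|].
    apply (holo_comp f phi); [apply Hpa, Hz | apply Hfa, Hpd, Hz].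
  - intros z Hz. unfold T_op, inD in *.
    assert (Hu : Cmod (phi z) < r).
    { pose proof (Cmod_le_mul_of_bounded phi r Hr Hpa Hpb Hp0 z Hz).
      assert (r * Cmod z < r * 1) by (apply Rmult_lt_compat_l; lra). lra. }
    assert (Hu1 : Cmod (phi z) < 1) by (apply Hpd, Hz).
    rewrite (cayley_inv (f (phi z))).
    + apply Re_sector_mul_cayley_pos with r; [apply HFre, Hz| |].
      * apply Rabs_Im_le_of_Carg; [apply HFre, Hz|]. rewrite <- HKr.
        apply Hlub. exists z. auto.
      * eapply Rle_lt_trans; [apply (cayley_Re_pos_Cmod_le f Hf), Hu1 | exact Hu].
    + intros E. pose proof (Hfre _ Hu1). apply (f_equal Re) in E.
      destruct (f (phi z)). unfold Re in *. simpl in *. lra.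
  - unfold T_op. rewrite Hp0, HF0, Hf0. ring.
Qed.
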